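(* Let $\mathbb{A}$ be a 2-category and $(\mathfrak{l}\dashv\mathfrak{p},\varepsilon,\eta):\mathfrak{b}\to\mathfrak{e}$ an adjunction in $\mathbb{A}$ (so $\mathfrak{l}:\mathfrak{b}\to\mathfrak{e}$, $\mathfrak{p}:\mathfrak{e}\to\mathfrak{b}$). Then: (1) if $\mathbb{A}$ has the two-dimensional cokernel diagram of $\mathfrak{p}$, the semantic lax descent factorization of $\mathfrak{p}$ is isomorphic to the usual factorization of $\mathfrak{p}$ through the Eilenberg–Moore object of the monad $(\mathfrak{b},\mathfrak{p}\mathfrak{l},\mathrm{id}_{\mathfrak{p}}\ast\varepsilon\ast\mathrm{id}_{\mathfrak{l}},\eta)$, either one existing if the other does; (2) if $\mathbb{A}$ has the two-dimensional kernel diagram of $\mathfrak{l}$, the semantic lax codescent factorization of $\mathfrak{l}$ is isomorphic to the usual factorization of $\mathfrak{l}$ through the Kleisli object of that monad, either one existing if the other does; (3) if $\mathbb{A}$ has the two-dimensional cokernel diagram of $\mathfrak{l}$, the semantic lax descent factorization of $\mathfrak{l}$ is isomorphic to the usual factorization of $\mathfrak{l}$ through the co-Eilenberg–Moore object of the comonad $(\mathfrak{e},\mathfrak{l}\mathfrak{p},\mathrm{id}_{\mathfrak{l}}\ast\eta\ast\mathrm{id}_{\mathfrak{p}},\varepsilon)$, either one existing if the other does; (4) if $\mathbb{A}$ has the two-dimensional kernel diagram of $\mathfrak{p}$, the semantic lax codescent factorization of $\mathfrak{p}$ is isomorphic to the usual factorization of $\mathfrak{p}$ through the co-Kleisli object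 of that comonad, either one existing if the other does.
   Context: A 2-category is a $\mathbf{Cat}$-enriched category; composition of 1-cells is juxtaposition, vertical composition of 2-cells is $\cdot$, horizontal composition is $\ast$, $\mathrm{id}_f$ is the identity 2-cell on $f$. An adjunction $(\mathfrak{l}\dashv\mathfrak{p},\varepsilon:\mathfrak{l}\mathfrak{p}\Rightarrow\mathrm{id}_{\mathfrak{e}},\eta:\mathrm{id}_{\mathfrak{b}}\Rightarrow\mathfrak{p}\mathfrak{l})$ satisfies the triangle identities. $\mathbb{A}^{\mathrm{op}}$, $\mathbb{A}^{\mathrm{co}}$, $\mathbb{A}^{\mathrm{coop}}$ are obtained from $\mathbb{A}$ by reversing 1-cells, 2-cells, or both. For a 1-cell $p:e\to b$: an opcomma object of $p$ along itself is $b\uparrow_p b$ with $\delta^0,\delta^1:b\to b\uparrow_pb$ and $\alpha:\delta^1p\Rightarrow\delta^0p$ such that for every $y$, $h\mapsto(h\delta^0,h\delta^1,\mathrm{id}_h\ast\alpha)$, $\xi\mapsto(\xi\ast\mathrm{id}_{\delta^0},\xi\ast\mathrm{id}_{\delta^1})$ is an isomorphism from $\mathbb{A}(b\uparrow_pb,y)$ onto the category of triples $(h_0,h_1:b\to y,\beta:h_1p\Rightarrow h_0p)$ with morphisms pairs $(\xi_0,\xi_1)$ with $(\xi_0\ast\mathrm{id}_p)\cdot\beta=\beta'\cdot(\xi_1\ast\mathrm{id}_p)$. A two-dimensional pushout of a span $f_0:c\to c_0$, $f_1:c\to c_1$ is $P$ with $q_0,q_1$, $q_0f_0=q_1f_1$,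 such that $k\mapsto(kq_0,kq_1)$ is an isomorphism from $\mathbb{A}(P,y)$ onto the category of pairs $(k_0,k_1)$ with $k_0f_0=k_1f_1$ and morphisms pairs of 2-cells $(\xi_0,\xi_1)$ with $\xi_0\ast\mathrm{id}_{f_0}=\xi_1\ast\mathrm{id}_{f_1}$. $\mathbb{A}$ has the two-dimensional cokernel diagram of $p$ if it has $b\uparrow_pb$ and a two-dimensional pushout $b\uparrow_pb\uparrow_pb$ of $(\delta^0,\delta^1)$ with $D^0,D^2$, $D^2\delta^0=D^0\delta^1$; $D^1$ is the unique 1-cell with $D^1\delta^1=D^2\delta^1$, $D^1\delta^0=D^0\delta^0$, $\mathrm{id}_{D^1}\ast\alpha=(\mathrm{id}_{D^0}\ast\alpha)\cdot(\mathrm{id}_{D^2}\ast\alpha)$; $s^0$ is the unique 1-cell with $s^0\delta^0=s^0\delta^1=\mathrm{id}_b$, $\mathrm{id}_{s^0}\ast\alpha=\mathrm{id}_p$. Semantic lax descent factorization of $p$: $\mathrm{Desc}_p(y)$ has objects $(h:y\to b,\beta:\delta^1h\Rightarrow\delta^0h)$ with $(\mathrm{id}_{D^0}\ast\beta)\cdot(\mathrm{id}_{D^2}\ast\beta)=\mathrm{id}_{D^1}\ast\beta$, $\mathrm{id}_{s^0}\ast\beta=\mathrm{id}_h$, and morphisms 2-cells $\xi:h_1\Rightarrow h_0$ with $\beta_0\cdot(\mathrm{id}_{\delta^1}\ast\xi)=(\mathrm{id}_{\delta^0}\ast\xi)\cdot\beta_1$; a lax descent object is $L$ with $d:L\to b$,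 $\Psi:\delta^1d\Rightarrow\delta^0d$ such that $g\mapsto(dg,\Psi\ast\mathrm{id}_g)$, $\xi\mapsto\mathrm{id}_d\ast\xi$ is an isomorphism $\mathbb{A}(y,L)\cong\mathrm{Desc}_p(y)$ for all $y$; the factorization is $p=d\,p^H$ with $p^H$ unique such that $dp^H=p$ and $\Psi\ast\mathrm{id}_{p^H}=\alpha$. An Eilenberg–Moore object of a monad $(b,t,m,\eta)$ is $b^{\mathsf{T}}$ with $u:b^{\mathsf{T}}\to b$, $\mu:tu\Rightarrow u$ such that $g\mapsto(ug,\mu\ast\mathrm{id}_g)$ is an isomorphism from $\mathbb{A}(y,b^{\mathsf{T}})$ onto the category of pairs $(h,\beta:th\Rightarrow h)$ with $\beta\cdot(\mathrm{id}_t\ast\beta)=\beta\cdot(m\ast\mathrm{id}_h)$, $\beta\cdot(\eta\ast\mathrm{id}_h)=\mathrm{id}_h$ (morphisms $\xi$ with $\xi\cdot\beta_1=\beta_0\cdot(\mathrm{id}_t\ast\xi)$). The usual factorization of the right adjoint $\mathfrak{p}$ through the Eilenberg–Moore object of the induced monad is $\mathfrak{p}=u\,k$ with $k:\mathfrak{e}\to\mathfrak{b}^{\mathsf{T}}$ unique such that $uk=\mathfrak{p}$ and $\mu\ast\mathrm{id}_k=\mathrm{id}_{\mathfrak{p}}\ast\varepsilon$. Duals: the two-dimensional kernel diagram of a 1-cell in $\mathbb{A}$ is its two-dimensional cokernel diagram in $\mathbb{A}^{\mathrm{op}}$, and its semantic lax codescent factorization is its semantic lax descent factorization in $\mathbb{A}^{\mathrm{op}}$.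 The usual factorization of $\mathfrak{l}$ through the Kleisli object, of $\mathfrak{l}$ through the co-Eilenberg–Moore object, and of $\mathfrak{p}$ through the co-Kleisli object are respectively the usual Eilenberg–Moore factorization of the right adjoint $\mathfrak{l}$ in $\mathbb{A}^{\mathrm{op}}$, of the right adjoint $\mathfrak{l}$ in $\mathbb{A}^{\mathrm{co}}$, and of the right adjoint $\mathfrak{p}$ in $\mathbb{A}^{\mathrm{coop}}$. Two factorizations $f=ac$ (through $X$) and $f=a'c'$ (through $X'$) are isomorphic if there is an isomorphism $\varphi:X\to X'$ with $a'\varphi=a$ and $\varphi c=c'$. *)

Record TwoCatData : Type := {
  Ob : Type;
  hom : Ob -> Ob -> Type;
  cell : forall a b : Ob, hom a b -> hom a b -> Type;
  id1 : forall a : Ob, hom a a;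
  comp1 : forall a b c : Ob, hom b c -> hom a b -> hom a c; (* comp1 g f = "g f" *)
  id2 : forall (a b : Ob) (f : hom a b), cell a b f f;
  vcomp : forall (a b : Ob) (f g h : hom a b),              (* vcomp x y = "x . y" *)
      cell a b g h -> cell a b f g -> cell a b f h;
  hcomp : forall (a b c : Ob) (g g' : hom b c) (f f' : hom a b),
      cell b c g g' -> cell a b f f' -> cell a c (comp1 a b c g f) (comp1 a b c g' f')
}.

Arguments hom {t} a b : rename.
Arguments cell {t a b} f g : rename.
Arguments id1 {t} a : rename.
Arguments comp1 {t a b c} g f : rename.
Arguments id2 {t a b} f : rename.
Arguments vcomp {t a b f g h} x y : rename.
Arguments hcomp {t a b c g g' f f'} x y : rename.

(* Equality of 2-cells whose boundary 1-cells are (propositionally) equal: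
   the boundaries coincide and the cells coincide after transport. *)
Definition heq2 {C : TwoCatData} {a b : Ob C} {f g f' g' : hom a b}
    (x : cell f g) (y : cell f' g') : Prop :=
  existT (fun st : hom a b * hom a b => cell (fst st) (snd st)) (f, g) x
  = existT (fun st : hom a b * hom a b => cell (fst st) (snd st)) (f', g') y.

(* "w = x . y" where the middle boundaries of x and y agree up to equality of
   1-cells (needed because associativity of 1-cells is only propositional). *)
Definition veq {C : TwoCatData} {a b : Ob C} {f1 g1 f2 g2 f3 g3 : hom a b}
    (w : cell f1 g1) (x : cell f2 g2) (y : cell f3 g3) : Prop :=
  exists (m : hom a b) (x' : cell m g2) (y' : cell f3 m),
    heq2 x x' /\ heq2 y y' /\ heq2 w (vcomp x' y').

Record TwoCatAxioms (C : TwoCatData) : Prop := {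
  ax_assoc : forall (a b c d : Ob C) (h : hom c d) (g : hom b c) (f : hom a b),
      comp1 h (comp1 g f) = comp1 (comp1 h g) f;
  ax_idl : forall (a b : Ob C) (f : hom a b), comp1 (id1 b) f = f;
  ax_idr : forall (a b : Ob C) (f : hom a b), comp1 f (id1 a) = f;
  ax_vassoc : forall (a b : Ob C) (f g h k : hom a b)
      (x : cell h k) (y : cell g h) (z : cell f g),
      vcomp x (vcomp y z) = vcomp (vcomp x y) z;
  ax_vidl : forall (a b : Ob C) (f g : hom a b) (x : cell f g), vcomp (id2 g) x = x;
  ax_vidr : forall (a b : Ob C) (f g : hom a b) (x : cell f g), vcomp x (id2 f) = x;
  ax_interchange : forall (a b c : Ob C) (g g' g'' : hom b c) (f f' f'' : hom a b)
      (x : cell g g') (x' : cell g' g'') (y : cell f f') (y' : cell f' f''),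
      hcomp (vcomp x' x) (vcomp y' y) = vcomp (hcomp x' y') (hcomp x y);
  ax_hid : forall (a b c : Ob C) (g : hom b c) (f : hom a b),
      hcomp (id2 g) (id2 f) = id2 (comp1 g f);
  ax_hassoc : forall (a b c d : Ob C) (h h' : hom c d) (g g' : hom b c) (f f' : hom a b)
      (x : cell h h') (y : cell g g') (z : cell f f'),
      heq2 (hcomp x (hcomp y z)) (hcomp (hcomp x y) z);
  ax_hidl : forall (a b : Ob C) (f f' : hom a b) (x : cell f f'),
      heq2 (hcomp (id2 (id1 b)) x) x;
  ax_hidr : forall (a b : Ob C) (f f' : hom a b) (x : cell f f'),
      heq2 (hcomp x (id2 (id1 a))) x
}.

Record TwoCat : Type := { tc :> TwoCatData; tc_ax : TwoCatAxioms tc }.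

Definition c1_assoc {C : TwoCat} {a b c d : Ob C} (h : hom c d) (g : hom b c) (f : hom a b)
  : comp1 h (comp1 g f) = comp1 (comp1 h g) f := @ax_assoc _ (tc_ax C) _ _ _ _ h g f.
Definition c1_idr {C : TwoCat} {a b : Ob C} (f : hom a b) : comp1 f (id1 a) = f :=
  @ax_idr _ (tc_ax C) _ _ f.

Definition cast2 {C : TwoCatData} {a b : Ob C} {f f' g g' : hom a b}
    (e1 : f = f') (e2 : g = g') (x : cell f g) : cell f' g' :=
  match e1 in _ = f1, e2 in _ = g1 return cell f1 g1 with eq_refl, eq_refl => x end.

Definition op_data (C : TwoCatData) : TwoCatData := {|
  Ob := Ob C;
  hom := fun a b => @hom C b a;
  cell := fun a b f g => @cell C b a f g;
  id1 := fun a => @id1 C a;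
  comp1 := fun a b c g f => comp1 f g;
  id2 := fun a b f => id2 f;
  vcomp := fun a b f g h x y => vcomp x y;
  hcomp := fun a b c g g' f f' x y => hcomp y x |}.

Definition co_data (C : TwoCatData) : TwoCatData := {|
  Ob := Ob C;
  hom := fun a b => @hom C a b;
  cell := fun a b f g => @cell C a b g f;
  id1 := fun a => @id1 C a;
  comp1 := fun a b c g f => comp1 g f;
  id2 := fun a b f => id2 f;
  vcomp := fun a b f g h x y => vcomp y x;
  hcomp := fun a b c g g' f f' x y => hcomp x y |}.

Lemma heq2_co (C : TwoCatData) (a b : Ob C) (f g f' g' : hom a b)
    (x : cell g f) (y : cell g' f') :
  heq2 x y -> @heq2 (co_data C) a b f g f' g' x y.
Proof.
  unfold heq2; intro H.
  exact (f_equal (fun s => existT (fun st : hom a b * hom a b => cell (snd st) (fst st))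
                     (snd (projT1 s), fst (projT1 s)) (projT2 s)) H).
Qed.

Lemma veq_co (C : TwoCatData) (a b : Ob C) (f1 g1 f2 g2 f3 g3 : hom a b)
    (w : cell g1 f1) (x : cell g2 f2) (y : cell g3 f3) :
  veq w y x -> @veq (co_data C) a b f1 g1 f2 g2 f3 g3 w x y.
Proof.
  intros [m [y' [x' [H1 [H2 H3]]]]].
  exists m, x', y'.
  split; [|split].
  - exact (heq2_co C a b _ _ _ _ x x' H2).
  - exact (heq2_co C a b _ _ _ _ y y' H1).
  - exact (heq2_co C a b _ _ _ _ w (vcomp y' x') H3).
Qed.

Lemma op_ax (C : TwoCat) : TwoCatAxioms (op_data C).
Proof.
  destruct C as [C H]; simpl.
  constructor; intros; simpl.
  - symmetry; apply (ax_assoc _ H).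
  - apply (ax_idr _ H).
  - apply (ax_idl _ H).
  - apply (ax_vassoc _ H).
  - apply (ax_vidl _ H).
  - apply (ax_vidr _ H).
  - apply (ax_interchange _ H).
  - apply (ax_hid _ H).
  - unfold heq2; simpl; symmetry; apply (ax_hassoc _ H).
  - apply (ax_hidr _ H).
  - apply (ax_hidl _ H).
Qed.

Lemma co_ax (C : TwoCat) : TwoCatAxioms (co_data C).
Proof.
  destruct C as [C H]; simpl.
  constructor; intros; simpl.
  - apply (ax_assoc _ H).
  - apply (ax_idl _ H).
  - apply (ax_idr _ H).
  - symmetry; apply (ax_vassoc _ H).
  - apply (ax_vidr _ H).
  - apply (ax_vidl _ H).
  - apply (ax_interchange _ H).
  - apply (ax_hid _ H).
  - apply heq2_co; apply (ax_hassoc _ H).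
  - apply heq2_co; apply (ax_hidl _ H).
  - apply heq2_co; apply (ax_hidr _ H).
Qed.

Definition op (C : TwoCat) : TwoCat := {| tc := op_data C; tc_ax := op_ax C |}.
Definition co (C : TwoCat) : TwoCat := {| tc := co_data C; tc_ax := co_ax C |}.
Definition coop (C : TwoCat) : TwoCat := co (op C).

Record Adjunction (C : TwoCat) (b e : Ob C) : Type := {
  adj_l : hom b e;
  adj_p : hom e b;
  adj_eps : cell (comp1 adj_l adj_p) (id1 e);
  adj_eta : cell (id1 b) (comp1 adj_p adj_l);
  adj_tri_l : veq (id2 adj_l) (hcomp adj_eps (id2 adj_l)) (hcomp (id2 adj_l) adj_eta);
  adj_tri_p : veq (id2 adj_p) (hcomp (id2 adj_p) adj_eps) (hcomp adj_eta (id2 adj_p))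
}.
Arguments adj_l {C b e} _.
Arguments adj_p {C b e} _.
Arguments adj_eps {C b e} _.
Arguments adj_eta {C b e} _.
Arguments adj_tri_l {C b e} _.
Arguments adj_tri_p {C b e} _.

Definition adj_op {C : TwoCat} {b e : Ob C} (X : Adjunction C b e) : Adjunction (op C) b e :=
  @Build_Adjunction (op C) b e (adj_p X) (adj_l X) (adj_eps X) (adj_eta X)
     (adj_tri_p X) (adj_tri_l X).

Definition adj_co {C : TwoCat} {b e : Ob C} (X : Adjunction C b e) : Adjunction (co C) e b :=
  @Build_Adjunction (co C) e b (adj_p X) (adj_l X) (adj_eta X) (adj_eps X)
     (veq_co C _ _ _ _ _ _ _ _ _ _ _ (adj_tri_p X))
     (veq_co C _ _ _ _ _ _ _ _ _ _ _ (adj_tri_l X)).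

Definition adj_coop {C : TwoCat} {b e : Ob C} (X : Adjunction C b e) : Adjunction (coop C) e b :=
  adj_co (adj_op X).

Definition oc_beta {C : TwoCat} {e b o y : Ob C} (p : hom e b) (d0 d1 : hom b o)
    (alpha : cell (comp1 d1 p) (comp1 d0 p)) (h : hom o y)
  : cell (comp1 (comp1 h d1) p) (comp1 (comp1 h d0) p) :=
  cast2 (c1_assoc h d1 p) (c1_assoc h d0 p) (hcomp (id2 h) alpha).

Definition oc_triple {C : TwoCat} {e b o y : Ob C} (p : hom e b) (d0 d1 : hom b o)
    (alpha : cell (comp1 d1 p) (comp1 d0 p)) (h : hom o y)
  : { h0 : hom b y & { h1 : hom b y & cell (comp1 h1 p) (comp1 h0 p) } } :=
  existT _ (comp1 h d0) (existT _ (comp1 h d1) (oc_beta p d0 d1 alpha h)).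

(* h |-> (h d0, h d1, id_h * alpha), xi |-> (xi * id_d0, xi * id_d1) is an
   isomorphism of categories A(o, y) ~= triples, for every y:
   bijective on objects, and bijective on each hom-set (fully faithful). *)
Definition IsOpcomma {C : TwoCat} {e b o : Ob C} (p : hom e b) (d0 d1 : hom b o)
    (alpha : cell (comp1 d1 p) (comp1 d0 p)) : Prop :=
  (forall (y : Ob C) (h0 h1 : hom b y) (beta : cell (comp1 h1 p) (comp1 h0 p)),
      exists! h : hom o y, oc_triple p d0 d1 alpha h = existT _ h0 (existT _ h1 beta)) /\
  (forall (y : Ob C) (h h' : hom o y)
      (xi0 : cell (comp1 h d0) (comp1 h' d0)) (xi1 : cell (comp1 h d1) (comp1 h' d1)),
      vcomp (hcomp xi0 (id2 p)) (oc_beta p d0 d1 alpha h)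
        = vcomp (oc_beta p d0 d1 alpha h') (hcomp xi1 (id2 p)) ->
      exists! xi : cell h h', hcomp xi (id2 d0) = xi0 /\ hcomp xi (id2 d1) = xi1).

Definition IsPushout2 {C : TwoCat} {c c0 c1 P : Ob C} (f0 : hom c c0) (f1 : hom c c1)
    (q0 : hom c0 P) (q1 : hom c1 P) : Prop :=
  comp1 q0 f0 = comp1 q1 f1 /\
  (forall (y : Ob C) (k0 : hom c0 y) (k1 : hom c1 y),
      comp1 k0 f0 = comp1 k1 f1 ->
      exists! k : hom P y, comp1 k q0 = k0 /\ comp1 k q1 = k1) /\
  (forall (y : Ob C) (k k' : hom P y)
      (xi0 : cell (comp1 k q0) (comp1 k' q0)) (xi1 : cell (comp1 k q1) (comp1 k' q1)),
      heq2 (hcomp xi0 (id2 f0)) (hcomp xi1 (id2 f1)) ->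
      exists! xi : cell k k', hcomp xi (id2 q0) = xi0 /\ hcomp xi (id2 q1) = xi1).

Record CokernelDiagram {C : TwoCat} {e b : Ob C} (p : hom e b) : Type := {
  ck_O : Ob C;
  ck_d0 : hom b ck_O;
  ck_d1 : hom b ck_O;
  ck_alpha : cell (comp1 ck_d1 p) (comp1 ck_d0 p);
  ck_opcomma : IsOpcomma p ck_d0 ck_d1 ck_alpha;
  ck_P : Ob C;
  ck_D0 : hom ck_O ck_P;
  ck_D2 : hom ck_O ck_P;
  ck_pushout : IsPushout2 ck_d0 ck_d1 ck_D2 ck_D0;
  ck_D1 : hom ck_O ck_P;
  ck_D1_d1 : comp1 ck_D1 ck_d1 = comp1 ck_D2 ck_d1;
  ck_D1_d0 : comp1 ck_D1 ck_d0 = comp1 ck_D0 ck_d0;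
  ck_D1_alpha : veq (hcomp (id2 ck_D1) ck_alpha)
                    (hcomp (id2 ck_D0) ck_alpha) (hcomp (id2 ck_D2) ck_alpha);
  ck_s0 : hom ck_O b;
  ck_s0_d0 : comp1 ck_s0 ck_d0 = id1 b;
  ck_s0_d1 : comp1 ck_s0 ck_d1 = id1 b;
  ck_s0_alpha : heq2 (hcomp (id2 ck_s0) ck_alpha) (id2 p)
}.
Arguments ck_O {C e b p} _.
Arguments ck_d0 {C e b p} _.
Arguments ck_d1 {C e b p} _.
Arguments ck_alpha {C e b p} _.
Arguments ck_P {C e b p} _.
Arguments ck_D0 {C e b p} _.
Arguments ck_D1 {C e b p} _.
Arguments ck_D2 {C e b p} _.
Arguments ck_s0 {C e b p} _.

Definition KernelDiagram {C : TwoCat} {x y : Ob C} (f : hom x y) : Type :=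
  @CokernelDiagram (op C) y x f.

Definition DescObj {C : TwoCat} {e b : Ob C} {p : hom e b} (K : CokernelDiagram p)
    {y : Ob C} (h : hom y b) (beta : cell (comp1 (ck_d1 K) h) (comp1 (ck_d0 K) h)) : Prop :=
  veq (hcomp (id2 (ck_D1 K)) beta) (hcomp (id2 (ck_D0 K)) beta) (hcomp (id2 (ck_D2 K)) beta)
  /\ heq2 (hcomp (id2 (ck_s0 K)) beta) (id2 h).

Definition DescMor {C : TwoCat} {e b : Ob C} {p : hom e b} (K : CokernelDiagram p)
    {y : Ob C} {h0 h1 : hom y b}
    (beta0 : cell (comp1 (ck_d1 K) h0) (comp1 (ck_d0 K) h0))
    (beta1 : cell (comp1 (ck_d1 K) h1) (comp1 (ck_d0 K) h1)) (xi : cell h1 h0) : Prop :=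
  vcomp beta0 (hcomp (id2 (ck_d1 K)) xi) = vcomp (hcomp (id2 (ck_d0 K)) xi) beta1.

Definition ld_beta {C : TwoCat} {e b : Ob C} {p : hom e b} (K : CokernelDiagram p)
    {L y : Ob C} (d : hom L b) (Psi : cell (comp1 (ck_d1 K) d) (comp1 (ck_d0 K) d))
    (g : hom y L) : cell (comp1 (ck_d1 K) (comp1 d g)) (comp1 (ck_d0 K) (comp1 d g)) :=
  cast2 (eq_sym (c1_assoc (ck_d1 K) d g)) (eq_sym (c1_assoc (ck_d0 K) d g)) (hcomp Psi (id2 g)).

(* (L, d, Psi) is a lax descent object: g |-> (d g, Psi * id_g), xi |-> id_d * xi
   is an isomorphism of categories A(y, L) ~= Desc_p(y) for all y. *)
Definition IsLaxDescObj {C : TwoCat} {e b : Ob C} {p : hom e b} (K : CokernelDiagram p)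
    {L : Ob C} (d : hom L b) (Psi : cell (comp1 (ck_d1 K) d) (comp1 (ck_d0 K) d)) : Prop :=
  (forall (y : Ob C) (g : hom y L), DescObj K (comp1 d g) (ld_beta K d Psi g)) /\
  (forall (y : Ob C) (h : hom y b) (beta : cell (comp1 (ck_d1 K) h) (comp1 (ck_d0 K) h)),
      DescObj K h beta ->
      exists! g : hom y L,
        existT (fun h' : hom y b => cell (comp1 (ck_d1 K) h') (comp1 (ck_d0 K) h'))
               (comp1 d g) (ld_beta K d Psi g)
        = existT (fun h' : hom y b => cell (comp1 (ck_d1 K) h') (comp1 (ck_d0 K) h')) h beta) /\
  (forall (y : Ob C) (g g' : hom y L) (m : cell (comp1 d g) (comp1 d g')),
      DescMor K (ld_beta K d Psi g') (ld_beta K d Psi g) m ->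
      exists! xi : cell g g', hcomp (id2 d) xi = m).

Record LaxDescFact {C : TwoCat} {e b : Ob C} {p : hom e b} (K : CokernelDiagram p) : Type := {
  ldf_L : Ob C;
  ldf_d : hom ldf_L b;
  ldf_Psi : cell (comp1 (ck_d1 K) ldf_d) (comp1 (ck_d0 K) ldf_d);
  ldf_is : IsLaxDescObj K ldf_d ldf_Psi;
  ldf_pH : hom e ldf_L;
  ldf_fact : comp1 ldf_d ldf_pH = p;
  ldf_Psi_pH : heq2 (hcomp ldf_Psi (id2 ldf_pH)) (ck_alpha K)
}.
Arguments ldf_L {C e b p K} _.
Arguments ldf_d {C e b p K} _.
Arguments ldf_pH {C e b p K} _.

Definition LaxCodescFact {C : TwoCat} {x y : Ob C} {f : hom x y} (K : KernelDiagram f) : Type :=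
  @LaxDescFact (op C) y x f K.

Definition AlgObj {C : TwoCat} {b : Ob C} (t : hom b b) (m : cell (comp1 t t) t)
    (eta : cell (id1 b) t) {y : Ob C} (h : hom y b) (beta : cell (comp1 t h) h) : Prop :=
  heq2 (vcomp beta (hcomp (id2 t) beta)) (vcomp beta (hcomp m (id2 h))) /\
  heq2 (vcomp beta (hcomp eta (id2 h))) (id2 h).

Definition AlgMor {C : TwoCat} {b : Ob C} (t : hom b b) {y : Ob C} {h0 h1 : hom y b}
    (beta0 : cell (comp1 t h0) h0) (beta1 : cell (comp1 t h1) h1) (xi : cell h1 h0) : Prop :=
  vcomp xi beta1 = vcomp beta0 (hcomp (id2 t) xi).

Definition em_beta {C : TwoCat} {b X y : Ob C} (t : hom b b) (u : hom X b)
    (mu : cell (comp1 t u) u) (g : hom y X) : cell (comp1 t (comp1 u g)) (comp1 u g) :=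
  cast2 (eq_sym (c1_assoc t u g)) eq_refl (hcomp mu (id2 g)).

Definition IsEMObj {C : TwoCat} {b : Ob C} (t : hom b b) (m : cell (comp1 t t) t)
    (eta : cell (id1 b) t) {X : Ob C} (u : hom X b) (mu : cell (comp1 t u) u) : Prop :=
  (forall (y : Ob C) (g : hom y X), AlgObj t m eta (comp1 u g) (em_beta t u mu g)) /\
  (forall (y : Ob C) (h : hom y b) (beta : cell (comp1 t h) h),
      AlgObj t m eta h beta ->
      exists! g : hom y X,
        existT (fun h' : hom y b => cell (comp1 t h') h') (comp1 u g) (em_beta t u mu g)
        = existT (fun h' : hom y b => cell (comp1 t h') h') h beta) /\
  (forall (y : Ob C) (g g' : hom y X) (m' : cell (comp1 u g) (comp1 u g')),
      AlgMor t (em_beta t u mu g') (em_beta t u mu g) m' ->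
      exists! xi : cell g g', hcomp (id2 u) xi = m').

Definition adj_T {C : TwoCat} {b e : Ob C} (X : Adjunction C b e) : hom b b :=
  comp1 (adj_p X) (adj_l X).

Definition adj_mult {C : TwoCat} {b e : Ob C} (X : Adjunction C b e)
  : cell (comp1 (adj_T X) (adj_T X)) (adj_T X) :=
  cast2 (eq_trans (f_equal (fun z => comp1 z (adj_l X)) (c1_assoc (adj_p X) (adj_l X) (adj_p X)))
                  (eq_sym (c1_assoc (comp1 (adj_p X) (adj_l X)) (adj_p X) (adj_l X))))
        (f_equal (fun z => comp1 z (adj_l X)) (c1_idr (adj_p X)))
        (hcomp (hcomp (id2 (adj_p X)) (adj_eps X)) (id2 (adj_l X))).

Record EMFact {C : TwoCat} {b e : Ob C} (X : Adjunction C b e) : Type := {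
  emf_bT : Ob C;
  emf_u : hom emf_bT b;
  emf_mu : cell (comp1 (adj_T X) emf_u) emf_u;
  emf_is : IsEMObj (adj_T X) (adj_mult X) (adj_eta X) emf_u emf_mu;
  emf_k : hom e emf_bT;
  emf_fact : comp1 emf_u emf_k = adj_p X;
  emf_mu_k : heq2 (hcomp emf_mu (id2 emf_k)) (hcomp (id2 (adj_p X)) (adj_eps X))
}.
Arguments emf_bT {C b e X} _.
Arguments emf_u {C b e X} _.
Arguments emf_k {C b e X} _.

Definition KleisliFact {C : TwoCat} {b e : Ob C} (X : Adjunction C b e) : Type :=
  EMFact (adj_op X).
Definition CoEMFact {C : TwoCat} {b e : Ob C} (X : Adjunction C b e) : Type :=
  EMFact (adj_co X).
Definition CoKleisliFact {C : TwoCat} {b e : Ob C} (X : Adjunction C b e) : Type :=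
  EMFact (adj_coop X).

Definition FactIso {C : TwoCat} {x y X X' : Ob C}
    (a : hom X y) (c : hom x X) (a' : hom X' y) (c' : hom x X') : Prop :=
  exists (phi : hom X X') (psi : hom X' X),
    comp1 phi psi = id1 X' /\ comp1 psi phi = id1 X /\
    comp1 a' phi = a /\ comp1 phi c = c'.

Definition Claim1 {C : TwoCat} {b e : Ob C} (X : Adjunction C b e)
    (K : CokernelDiagram (adj_p X)) : Prop :=
  (inhabited (LaxDescFact K) <-> inhabited (EMFact X)) /\
  forall (F : LaxDescFact K) (G : EMFact X),
    FactIso (ldf_d F) (ldf_pH F) (emf_u G) (emf_k G).

Definition Claim2 {C : TwoCat} {b e : Ob C} (X : Adjunction C b e)
    (K : KernelDiagram (adj_l X)) : Prop :=
  (inhabited (LaxCodescFact K) <-> inhabited (KleisliFact X)) /\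
  forall (F : LaxCodescFact K) (G : KleisliFact X),
    @FactIso (op C) _ _ _ _ (ldf_d F) (ldf_pH F) (emf_u G) (emf_k G).

Definition Claim3 {C : TwoCat} {b e : Ob C} (X : Adjunction C b e)
    (K : CokernelDiagram (adj_l X)) : Prop :=
  (inhabited (LaxDescFact K) <-> inhabited (CoEMFact X)) /\
  forall (F : LaxDescFact K) (G : CoEMFact X),
    @FactIso C _ _ _ _ (ldf_d F) (ldf_pH F) (emf_u G) (emf_k G).

Definition Claim4 {C : TwoCat} {b e : Ob C} (X : Adjunction C b e)
    (K : KernelDiagram (adj_p X)) : Prop :=
  (inhabited (LaxCodescFact K) <-> inhabited (CoKleisliFact X)) /\
  forall (F : LaxCodescFact K) (G : CoKleisliFact X),
    @FactIso (op C) _ _ _ _ (ldf_d F) (ldf_pH F) (emf_u G) (emf_k G).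

From Stdlib Require Import Eqdep ClassicalEpsilon.

(* The opcomma property classifies the triple [(id_b, p l, id_p * eps)] by a 1-cell
   [r : b|p b -> b].  Whiskering by [r] turns a descent datum [(h, beta)] for [p]
   into an algebra [(h, r beta)] for the monad [p l]; conversely an algebra [(h, a)]
   gives the descent datum [(d0 a) . (alpha_mate h)], where
   [alpha_mate = (alpha l) . (d1 eta) : d1 => d0 p l] is the mate of [alpha].  The
   two constructions are mutually inverse, natural in [h] and compatible with
   morphisms, so [Desc_p(y)] and the algebras on [y] form isomorphic categories,
   naturally in [y]: a lax descent object of [p] is the same thing as an
   Eilenberg-Moore object, with the same comparison 1-cell.  The other claims are
   the first one in [A^op], [A^co] and [A^coop]; in [A^co] the cokernel diagram has
   to be reflected, because reversing 2-cells exchanges [d0] and [d1]. *)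

(** * Packed 2-cells *)

(* Since composition of 1-cells is only
   propositionally associative, working with packed cells avoids all transports,
   and [heq2 x y] is literally [tot x = tot y]. *)
Section TotalCells.
Context {C : TwoCat}.

Definition tcell (a b : Ob C) : Type :=
  {st : hom a b * hom a b & cell (fst st) (snd st)}.

Definition src {a b : Ob C} (X : tcell a b) : hom a b := fst (projT1 X).
Definition tgt {a b : Ob C} (X : tcell a b) : hom a b := snd (projT1 X).

Definition tot {a b : Ob C} {f g : hom a b} (x : cell f g) : tcell a b :=
  existT (fun st : hom a b * hom a b => cell (fst st) (snd st)) (f, g) x.

Definition tid {a b : Ob C} (f : hom a b) : tcell a b := tot (id2 f).

Definition thc {a b c : Ob C} (X : tcell b c) (Y : tcell a b) : tcell a c :=
  tot (hcomp (projT2 X) (projT2 Y)).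

(* Junk value [X] when the boundaries do not match. *)
Definition tvc {a b : Ob C} (X Y : tcell a b) : tcell a b :=
  match excluded_middle_informative (tgt Y = src X) with
  | left e => tot (vcomp (projT2 X) (cast2 eq_refl e (projT2 Y)))
  | right _ => X
  end.

Definition untot {a b : Ob C} (X : tcell a b) {f g : hom a b}
    (ef : src X = f) (eg : tgt X = g) : cell f g :=
  cast2 ef eg (projT2 X).

Lemma tot_inj {a b : Ob C} {f g : hom a b} (x y : cell f g) : tot x = tot y -> x = y.
Proof. intro H. exact (inj_pair2 _ _ _ _ _ H). Qed.

Lemma tot_cast {a b : Ob C} {f g f' g' : hom a b} (ef : f = f') (eg : g = g') (x : cell f g) :
  tot (cast2 ef eg x) = tot x.
Proof. destruct ef, eg. reflexivity. Qed.

Lemma tcell_eta {a b : Ob C} (X : tcell a b) : X = @tot a b (src X) (tgt X) (projT2 X).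
Proof. destruct X as [[f g] x]. reflexivity. Qed.

Lemma tot_untot {a b : Ob C} (X : tcell a b) {f g : hom a b}
    (ef : src X = f) (eg : tgt X = g) : tot (untot X ef eg) = X.
Proof. unfold untot. rewrite tot_cast. symmetry. apply tcell_eta. Qed.

Lemma tcell_view {a b : Ob C} (X : tcell a b) :
  exists (f g : hom a b) (x : cell f g), X = tot x.
Proof. destruct X as [[f g] x]. exists f, g, x. reflexivity. Qed.

End TotalCells.

Ltac destruct_tcell X :=
  let f := fresh "f" in let g := fresh "g" in let x := fresh "x" in
  destruct (tcell_view X) as (f & g & x & ->).

Infix "<h>" := thc (at level 33, left associativity).
Infix "<v>" := tvc (at level 43, left associativity).

Section TotalCellLaws.
Context {C : TwoCat}.

Lemma src_tot {a b : Ob C} {f g : hom a b} (x : cell f g) : src (tot x) = f.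
Proof. reflexivity. Qed.
Lemma tgt_tot {a b : Ob C} {f g : hom a b} (x : cell f g) : tgt (tot x) = g.
Proof. reflexivity. Qed.
Lemma src_tid {a b : Ob C} (f : hom a b) : src (tid f) = f.
Proof. reflexivity. Qed.
Lemma tgt_tid {a b : Ob C} (f : hom a b) : tgt (tid f) = f.
Proof. reflexivity. Qed.
Lemma src_thc {a b c : Ob C} (X : tcell b c) (Y : tcell a b) :
  src (X <h> Y) = comp1 (src X) (src Y).
Proof. reflexivity. Qed.
Lemma tgt_thc {a b c : Ob C} (X : tcell b c) (Y : tcell a b) :
  tgt (X <h> Y) = comp1 (tgt X) (tgt Y).
Proof. reflexivity. Qed.

Lemma thc_tot {a b c : Ob C} {g g' : hom b c} {f f' : hom a b} (x : cell g g') (y : cell f f') :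
  tot x <h> tot y = tot (hcomp x y).
Proof. reflexivity. Qed.

Lemma tvc_tot {a b : Ob C} {f g h : hom a b} (x : cell g h) (y : cell f g) :
  tot x <v> tot y = tot (vcomp x y).
Proof.
  unfold tvc. destruct (excluded_middle_informative _) as [e | n].
  - simpl in e. rewrite (UIP_refl _ _ e). reflexivity.
  - exfalso. apply n. reflexivity.
Qed.

Lemma src_tvc {a b : Ob C} (X Y : tcell a b) : tgt Y = src X -> src (X <v> Y) = src Y.
Proof.
  destruct_tcell X; destruct_tcell Y. intro e; cbn in e; subst. rewrite tvc_tot. reflexivity.
Qed.
Lemma tgt_tvc {a b : Ob C} (X Y : tcell a b) : tgt Y = src X -> tgt (X <v> Y) = tgt X.
Proof.
  destruct_tcell X; destruct_tcell Y. intro e; cbn in e; subst. rewrite tvc_tot. reflexivity.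
Qed.

Lemma tvc_assoc {a b : Ob C} (X Y Z : tcell a b) :
  tgt Y = src X -> tgt Z = src Y -> X <v> (Y <v> Z) = X <v> Y <v> Z.
Proof.
  destruct_tcell X; destruct_tcell Y; destruct_tcell Z. intros e1 e2; cbn in e1, e2; subst.
  rewrite !tvc_tot. f_equal. apply (ax_vassoc _ (tc_ax C)).
Qed.

Lemma tvc_idl {a b : Ob C} (X : tcell a b) (f : hom a b) : tgt X = f -> tid f <v> X = X.
Proof.
  destruct_tcell X. intro e; cbn in e; subst. unfold tid. rewrite tvc_tot.
  f_equal. apply (ax_vidl _ (tc_ax C)).
Qed.
Lemma tvc_idr {a b : Ob C} (X : tcell a b) (f : hom a b) : src X = f -> X <v> tid f = X.
Proof.
  destruct_tcell X. intro e; cbn in e; subst. unfold tid. rewrite tvc_tot.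
  f_equal. apply (ax_vidr _ (tc_ax C)).
Qed.

Lemma thc_assoc {a b c d : Ob C} (X : tcell c d) (Y : tcell b c) (Z : tcell a b) :
  X <h> (Y <h> Z) = X <h> Y <h> Z.
Proof.
  destruct X as [[f g] x], Y as [[f' g'] y], Z as [[f'' g''] z].
  exact (ax_hassoc _ (tc_ax C) _ _ _ _ _ _ _ _ _ _ x y z).
Qed.

Lemma thc_idl {a b : Ob C} (X : tcell a b) : tid (id1 b) <h> X = X.
Proof. destruct X as [[f g] x]. exact (ax_hidl _ (tc_ax C) _ _ _ _ x). Qed.
Lemma thc_idr {a b : Ob C} (X : tcell a b) : X <h> tid (id1 a) = X.
Proof. destruct X as [[f g] x]. exact (ax_hidr _ (tc_ax C) _ _ _ _ x). Qed.

Lemma thc_tid {a b c : Ob C} (g : hom b c) (f : hom a b) : tid g <h> tid f = tid (comp1 g f).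
Proof. unfold tid, thc. simpl. f_equal. apply (ax_hid _ (tc_ax C)). Qed.

Lemma interchange {a b c : Ob C} (X X' : tcell b c) (Y Y' : tcell a b) :
  tgt X = src X' -> tgt Y = src Y' -> (X' <v> X) <h> (Y' <v> Y) = (X' <h> Y') <v> (X <h> Y).
Proof.
  destruct_tcell X; destruct_tcell Y; destruct_tcell X'; destruct_tcell Y'.
  intros e1 e2; cbn in e1, e2; subst. rewrite !tvc_tot, !thc_tot, tvc_tot.
  f_equal. apply (ax_interchange _ (tc_ax C)).
Qed.

Lemma whiskerl_tvc {a b c : Ob C} (f : hom b c) (Y Z : tcell a b) :
  tgt Z = src Y -> tid f <h> (Y <v> Z) = (tid f <h> Y) <v> (tid f <h> Z).
Proof. intro H. rewrite <- interchange, tvc_idl; reflexivity || assumption. Qed.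
Lemma whiskerr_tvc {a b c : Ob C} (f : hom a b) (Y Z : tcell b c) :
  tgt Z = src Y -> (Y <v> Z) <h> tid f = (Y <h> tid f) <v> (Z <h> tid f).
Proof. intro H. rewrite <- interchange, tvc_idl; reflexivity || assumption. Qed.

Lemma whiskerl_comp {a b c d : Ob C} (f : hom c d) (g : hom b c) (Z : tcell a b) :
  tid f <h> (tid g <h> Z) = tid (comp1 f g) <h> Z.
Proof. rewrite thc_assoc, thc_tid. reflexivity. Qed.
Lemma whiskerr_comp {a b c d : Ob C} (Z : tcell c d) (g : hom b c) (f : hom a b) :
  Z <h> tid g <h> tid f = Z <h> tid (comp1 g f).
Proof. rewrite <- thc_assoc, thc_tid. reflexivity. Qed.

Lemma thc_whiskers_rl {a b c : Ob C} (Z : tcell b c) (W : tcell a b) :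
  Z <h> W = (Z <h> tid (tgt W)) <v> (tid (src Z) <h> W).
Proof. rewrite <- interchange, tvc_idl, tvc_idr; reflexivity. Qed.
Lemma thc_whiskers_lr {a b c : Ob C} (Z : tcell b c) (W : tcell a b) :
  Z <h> W = (tid (tgt Z) <h> W) <v> (Z <h> tid (src W)).
Proof. rewrite <- interchange, tvc_idl, tvc_idr; reflexivity. Qed.

Lemma whisker_exchange {a b c : Ob C} (Z : tcell b c) (W : tcell a b) :
  (Z <h> tid (tgt W)) <v> (tid (src Z) <h> W) = (tid (tgt Z) <h> W) <v> (Z <h> tid (src W)).
Proof. rewrite <- thc_whiskers_rl. apply thc_whiskers_lr. Qed.

Lemma veq_tot {a b : Ob C} {f1 g1 f2 g2 f3 g3 : hom a b}
    (w : cell f1 g1) (x : cell f2 g2) (y : cell f3 g3) :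
  veq w x y <-> g3 = f2 /\ tot w = tot x <v> tot y.
Proof.
  split.
  - intros (m & x' & y' & Hx & Hy & Hw). unfold heq2 in *. fold (tot x) (tot x') in Hx.
    fold (tot y) (tot y') in Hy. fold (tot w) (tot (vcomp x' y')) in Hw.
    split.
    + pose proof (f_equal src Hx) as Ex. pose proof (f_equal tgt Hy) as Ey.
      cbn in Ex, Ey. congruence.
    + rewrite Hx, Hy, Hw, tvc_tot. reflexivity.
  - intros [e H]. subst g3. exists f2, x, y. split; [reflexivity | split; [reflexivity |]].
    unfold heq2. fold (tot w) (tot (vcomp x y)). rewrite H, tvc_tot. reflexivity.
Qed.

End TotalCellLaws.

(** * Opcomma objects, pushouts and represented categories *)

Lemma existT_eq_tot {C : TwoCat} {y b a c : Ob C} (F G : hom y b -> hom a c)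
    (h1 h2 : hom y b) (x : cell (F h1) (G h1)) (x' : cell (F h2) (G h2)) :
  existT (fun h => cell (F h) (G h)) h1 x = existT _ h2 x' <-> h1 = h2 /\ tot x = tot x'.
Proof.
  split.
  - intro H. split.
    + exact (f_equal (@projT1 _ _) H).
    + exact (f_equal (fun s : {h : hom y b & cell (F h) (G h)} => tot (projT2 s)) H).
  - intros [<- H]. apply tot_inj in H. subst. reflexivity.
Qed.

Lemma triple_eq_tot {C : TwoCat} {e b y : Ob C} (p : hom e b) (h0 h1 h0' h1' : hom b y)
    (beta : cell (comp1 h1 p) (comp1 h0 p)) (beta' : cell (comp1 h1' p) (comp1 h0' p)) :
  existT (fun h0 => {h1 : hom b y & cell (comp1 h1 p) (comp1 h0 p)}) h0 (existT _ h1 beta)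
    = existT _ h0' (existT _ h1' beta')
  <-> h0 = h0' /\ h1 = h1' /\ tot beta = tot beta'.
Proof.
  split.
  - intro H. split; [| split].
    + exact (f_equal (@projT1 _ _) H).
    + exact (f_equal (fun s => projT1 (projT2 s)) H).
    + exact (f_equal (fun s : {h0 : hom b y & {h1 : hom b y & cell (comp1 h1 p) (comp1 h0 p)}}
                      => tot (projT2 (projT2 s))) H).
  - intros (<- & <- & H). apply tot_inj in H. subst. reflexivity.
Qed.

Section Opcomma.
Context {C : TwoCat} {e b o : Ob C} {p : hom e b} {d0 d1 : hom b o}
  {alpha : cell (comp1 d1 p) (comp1 d0 p)}.

Lemma tot_oc_beta {y : Ob C} (h : hom o y) :
  tot (oc_beta p d0 d1 alpha h) = tid h <h> tot alpha.
Proof. apply tot_cast. Qed.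

Hypothesis OC : IsOpcomma p d0 d1 alpha.

Lemma opcomma_factor {y : Ob C} (h0 h1 : hom b y) (Z : tcell e y) :
  src Z = comp1 h1 p -> tgt Z = comp1 h0 p ->
  exists h : hom o y, comp1 h d0 = h0 /\ comp1 h d1 = h1 /\ tid h <h> tot alpha = Z.
Proof.
  intros es et. destruct (proj1 OC y h0 h1 (untot Z es et)) as [h [Hh _]].
  apply triple_eq_tot in Hh. destruct Hh as (H0 & H1 & H2).
  exists h. rewrite <- tot_oc_beta, H2, tot_untot. auto.
Qed.

Lemma opcomma_factor_unique {y : Ob C} (h h' : hom o y) :
  comp1 h d0 = comp1 h' d0 -> comp1 h d1 = comp1 h' d1 ->
  tid h <h> tot alpha = tid h' <h> tot alpha -> h = h'.
Proof.
  intros e0 e1 e2.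
  destruct (proj1 OC y (comp1 h' d0) (comp1 h' d1) (oc_beta p d0 d1 alpha h')) as [h2 [_ U]].
  transitivity h2; [symmetry |]; apply U, triple_eq_tot; rewrite ?tot_oc_beta; auto.
Qed.

Lemma opcomma_factor_cell {y : Ob C} (h h' : hom o y) (Z0 Z1 : tcell b y) :
  src Z0 = comp1 h d0 -> tgt Z0 = comp1 h' d0 ->
  src Z1 = comp1 h d1 -> tgt Z1 = comp1 h' d1 ->
  (Z0 <h> tid p) <v> (tid h <h> tot alpha) = (tid h' <h> tot alpha) <v> (Z1 <h> tid p) ->
  exists Z : tcell o y, src Z = h /\ tgt Z = h' /\ Z <h> tid d0 = Z0 /\ Z <h> tid d1 = Z1.
Proof.
  intros s0 t0 s1 t1 H.
  destruct (proj2 OC y h h' (untot Z0 s0 t0) (untot Z1 s1 t1)) as [xi [[X0 X1] _]].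
  - apply tot_inj. rewrite <- !tvc_tot, <- !thc_tot, !tot_oc_beta, !tot_untot. exact H.
  - exists (tot xi). split; [reflexivity | split; [reflexivity | split]].
    + change (tot (hcomp xi (id2 d0)) = Z0). rewrite X0. apply tot_untot.
    + change (tot (hcomp xi (id2 d1)) = Z1). rewrite X1. apply tot_untot.
Qed.

End Opcomma.

Lemma pushout_factor {C : TwoCat} {c c0 c1 P : Ob C} {f0 : hom c c0} {f1 : hom c c1}
    {q0 : hom c0 P} {q1 : hom c1 P} :
  IsPushout2 f0 f1 q0 q1 -> forall (y : Ob C) (k0 : hom c0 y) (k1 : hom c1 y),
  comp1 k0 f0 = comp1 k1 f1 -> exists k : hom P y, comp1 k q0 = k0 /\ comp1 k q1 = k1.
Proof. intros [_ [H _]] y k0 k1 E. destruct (H y k0 k1 E) as [k [Hk _]]. eauto. Qed.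

Section Representation.
Context {C : TwoCat} {b Z : Ob C}.
Variable ObjT : forall y : Ob C, hom y b -> tcell y Z -> Prop.
Variable MorT : forall y : Ob C, hom y b -> hom y b -> tcell y Z -> tcell y Z -> tcell y b -> Prop.

(* [g |-> (d g, Psi g)] is an isomorphism from [A(y, L)] onto the category
   with objects [ObjT] and morphisms [MorT]. *)
Record Represents {L : Ob C} (d : hom L b) (Psi : tcell L Z) : Prop := {
  rep_obj : forall y (g : hom y L), ObjT y (comp1 d g) (Psi <h> tid g);
  rep_surj : forall y (h : hom y b) B, ObjT y h B ->
    exists g, comp1 d g = h /\ Psi <h> tid g = B;
  rep_inj : forall y (g g' : hom y L),
    comp1 d g = comp1 d g' -> Psi <h> tid g = Psi <h> tid g' -> g = g';
  rep_full : forall y (g g' : hom y L) Xi, src Xi = comp1 d g -> tgt Xi = comp1 d g' ->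
    MorT y (comp1 d g') (comp1 d g) (Psi <h> tid g') (Psi <h> tid g) Xi ->
    exists W, src W = g /\ tgt W = g' /\ tid d <h> W = Xi;
  rep_faithful : forall y (g g' : hom y L) W W',
    src W = g -> tgt W = g' -> src W' = g -> tgt W' = g' ->
    tid d <h> W = tid d <h> W' -> W = W'
}.

Lemma represents_obj_self {L : Ob C} {d : hom L b} {Psi : tcell L Z} :
  Represents d Psi -> ObjT L d Psi.
Proof.
  intro R. pose proof (rep_obj _ _ R L (id1 L)) as H. rewrite c1_idr, thc_idr in H. exact H.
Qed.

Lemma represents_fact_iso {x L X : Ob C} {d : hom L b} {u : hom X b}
    {Psi : tcell L Z} {Phi : tcell X Z} {c : hom x L} {k : hom x X} :
  Represents d Psi -> Represents u Phi ->
  comp1 d c = comp1 u k -> Psi <h> tid c = Phi <h> tid k -> FactIso d c u k.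
Proof.
  intros RL RX e1 e2.
  destruct (rep_surj _ _ RX L d Psi (represents_obj_self RL)) as (phi & ph1 & ph2).
  destruct (rep_surj _ _ RL X u Phi (represents_obj_self RX)) as (psi & ps1 & ps2).
  exists phi, psi. split; [| split; [| split]].
  - apply (rep_inj _ _ RX).
    + rewrite c1_assoc, ph1, ps1, c1_idr. reflexivity.
    + rewrite <- whiskerr_comp, ph2, ps2, thc_idr. reflexivity.
  - apply (rep_inj _ _ RL).
    + rewrite c1_assoc, ps1, ph1, c1_idr. reflexivity.
    + rewrite <- whiskerr_comp, ps2, ph2, thc_idr. reflexivity.
  - exact ph1.
  - apply (rep_inj _ _ RX).
    + rewrite c1_assoc, ph1. exact e1.
    + rewrite <- whiskerr_comp, ph2. exact e2.
Qed.

End Representation.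

Arguments rep_obj {C b Z ObjT MorT L d Psi}.
Arguments rep_surj {C b Z ObjT MorT L d Psi}.
Arguments rep_inj {C b Z ObjT MorT L d Psi}.
Arguments rep_full {C b Z ObjT MorT L d Psi}.
Arguments rep_faithful {C b Z ObjT MorT L d Psi}.
Arguments represents_obj_self {C b Z ObjT MorT L d Psi}.
Arguments represents_fact_iso {C b Z ObjT MorT x L X d u Psi Phi c k}.

(* [IsEMObj] and [IsLaxDescObj] are both instances of [RawRepresents]. *)
Section RawRepresentation.
Context {C : TwoCat} {b Z : Ob C}.
Variables F G : forall y : Ob C, hom y b -> hom y Z.
Variable whisk : forall (L y : Ob C) (d : hom L b), cell (F L d) (G L d) ->
  forall g : hom y L, cell (F y (comp1 d g)) (G y (comp1 d g)).
Variable RawObj : forall (y : Ob C) (h : hom y b), cell (F y h) (G y h) -> Prop.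
Variable RawMor : forall (y : Ob C) (h0 h1 : hom y b),
  cell (F y h0) (G y h0) -> cell (F y h1) (G y h1) -> cell h1 h0 -> Prop.
Variable ObjT : forall y : Ob C, hom y b -> tcell y Z -> Prop.
Variable MorT : forall y : Ob C, hom y b -> hom y b -> tcell y Z -> tcell y Z -> tcell y b -> Prop.

Hypothesis tot_whisk : forall L y d Psi (g : hom y L), tot (whisk L y d Psi g) = tot Psi <h> tid g.
Hypothesis obj_tot : forall y h beta, RawObj y h beta <-> ObjT y h (tot beta).
Hypothesis objT_boundary : forall y h B, ObjT y h B -> src B = F y h /\ tgt B = G y h.
Hypothesis mor_tot : forall y h0 h1 beta0 beta1 xi,
  RawMor y h0 h1 beta0 beta1 xi <-> MorT y h0 h1 (tot beta0) (tot beta1) (tot xi).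
Hypothesis mor_whisker : forall L y d Psi (g g' : hom y L) (xi : cell g g'),
  RawMor y (comp1 d g') (comp1 d g) (whisk L y d Psi g') (whisk L y d Psi g) (hcomp (id2 d) xi).

Definition RawRepresents {L : Ob C} (d : hom L b) (Psi : cell (F L d) (G L d)) : Prop :=
  (forall y (g : hom y L), RawObj y (comp1 d g) (whisk L y d Psi g)) /\
  (forall y (h : hom y b) (beta : cell (F y h) (G y h)), RawObj y h beta ->
    exists! g : hom y L, existT (fun h' => cell (F y h') (G y h')) (comp1 d g) (whisk L y d Psi g)
                         = existT _ h beta) /\
  (forall y (g g' : hom y L) (m : cell (comp1 d g) (comp1 d g')),
    RawMor y _ _ (whisk L y d Psi g') (whisk L y d Psi g) m ->
    exists! xi : cell g g', hcomp (id2 d) xi = m).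

Lemma raw_represents_iff {L : Ob C} (d : hom L b) (Psi : cell (F L d) (G L d)) :
  RawRepresents d Psi <-> Represents ObjT MorT d (tot Psi).
Proof.
  split.
  - intros (Hobj & Hsurj & Hfull). constructor.
    + intros y g. rewrite <- tot_whisk. apply obj_tot, Hobj.
    + intros y h B HB. destruct (objT_boundary _ _ _ HB) as [sB tB].
      destruct (Hsurj y h (untot B sB tB)) as [g [Hg _]].
      { apply obj_tot. rewrite tot_untot. exact HB. }
      apply existT_eq_tot in Hg. rewrite tot_untot, tot_whisk in Hg. exists g. exact Hg.
    + intros y g g' e1 e2.
      destruct (Hsurj y _ _ (Hobj y g')) as [g0 [_ U]].
      transitivity g0; [symmetry |]; apply U, existT_eq_tot; rewrite !tot_whisk; auto.
    + intros y g g' Xi sX tX HX.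
      destruct (Hfull y g g' (untot Xi sX tX)) as [xi [Hxi _]].
      { apply mor_tot. rewrite !tot_whisk, tot_untot. exact HX. }
      exists (tot xi). split; [reflexivity | split; [reflexivity |]].
      change (tot (hcomp (id2 d) xi) = Xi). rewrite Hxi. apply tot_untot.
    + intros y g g' W W' sW tW sW' tW' HW.
      destruct (Hfull y g g' (hcomp (id2 d) (untot W sW tW)) (mor_whisker _ _ _ _ _ _ _))
        as [xi [_ U]].
      rewrite <- (tot_untot W sW tW), <- (tot_untot W' sW' tW').
      f_equal. transitivity xi; [symmetry |]; apply U; [reflexivity |].
      apply tot_inj. change (tid d <h> tot (untot W' sW' tW') = tid d <h> tot (untot W sW tW)).
      rewrite !tot_untot. symmetry. exact HW.
  - intro R. split; [| split].
    + intros y g. apply obj_tot. rewrite tot_whisk. apply (rep_obj R).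
    + intros y h beta Hb. apply obj_tot in Hb.
      destruct (rep_surj R y h (tot beta) Hb) as (g & H1 & H2).
      exists g. split.
      * apply existT_eq_tot. rewrite tot_whisk. auto.
      * intros g' Hg'. apply existT_eq_tot in Hg'. rewrite tot_whisk in Hg'.
        destruct Hg' as [H3 H4]. apply (rep_inj R); congruence.
    + intros y g g' m Hm. apply mor_tot in Hm. rewrite !tot_whisk in Hm.
      destruct (rep_full R y g g' (tot m) eq_refl eq_refl Hm) as (W & sW & tW & HW).
      exists (untot W sW tW). split.
      * apply tot_inj. change (tid d <h> tot (untot W sW tW) = tot m). rewrite tot_untot. exact HW.
      * intros xi' Hxi'. apply tot_inj. rewrite tot_untot.
        apply (rep_faithful R y g g'); auto.
        change (tid d <h> W = tot (hcomp (id2 d) xi')). rewrite Hxi'. exact HW.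
Qed.

End RawRepresentation.

(** * Algebras and descent data *)

Section EilenbergMoore.
Context {C : TwoCat} {b : Ob C} (t : hom b b) (m : cell (comp1 t t) t) (eta : cell (id1 b) t).

Definition AlgT {y : Ob C} (h : hom y b) (B : tcell y b) : Prop :=
  src B = comp1 t h /\ tgt B = h /\
  B <v> (tid t <h> B) = B <v> (tot m <h> tid h) /\ B <v> (tot eta <h> tid h) = tid h.

Definition AlgMorT {y : Ob C} (h0 h1 : hom y b) (B0 B1 Xi : tcell y b) : Prop :=
  Xi <v> B1 = B0 <v> (tid t <h> Xi).

Lemma alg_obj_tot {y : Ob C} (h : hom y b) (beta : cell (comp1 t h) h) :
  AlgObj t m eta h beta <-> AlgT h (tot beta).
Proof.
  unfold AlgObj, AlgT, heq2.
  fold (tot (vcomp beta (hcomp (id2 t) beta))) (tot (vcomp beta (hcomp m (id2 h))))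
    (tot (vcomp beta (hcomp eta (id2 h)))) (tot (id2 h)).
  rewrite <- !tvc_tot. tauto.
Qed.

Lemma alg_mor_tot {y : Ob C} (h0 h1 : hom y b) (beta0 : cell (comp1 t h0) h0)
    (beta1 : cell (comp1 t h1) h1) (xi : cell h1 h0) :
  AlgMor t beta0 beta1 xi <-> AlgMorT h0 h1 (tot beta0) (tot beta1) (tot xi).
Proof.
  unfold AlgMor, AlgMorT. change (tid t <h> tot xi) with (tot (hcomp (id2 t) xi)).
  rewrite !tvc_tot. split; [intros -> | apply tot_inj]; reflexivity.
Qed.

Lemma tot_em_beta {X y : Ob C} (u : hom X b) (mu : cell (comp1 t u) u) (g : hom y X) :
  tot (em_beta t u mu g) = tot mu <h> tid g.
Proof. apply tot_cast. Qed.

Lemma em_object_represents {X : Ob C} (u : hom X b) (mu : cell (comp1 t u) u) :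
  IsEMObj t m eta u mu <-> Represents (@AlgT) (@AlgMorT) u (tot mu).
Proof.
  apply (raw_represents_iff (fun _ h => comp1 t h) (fun _ h => h)
           (fun L y d Psi g => em_beta t d Psi g)
           (fun y h beta => AlgObj t m eta h beta)
           (fun y h0 h1 beta0 beta1 xi => AlgMor t beta0 beta1 xi)).
  - intros. apply tot_em_beta.
  - intros. apply alg_obj_tot.
  - intros y h B (sB & tB & _). auto.
  - intros. apply alg_mor_tot.
  - intros L y d Psi g g' xi. apply alg_mor_tot.
    unfold AlgMorT. change (tot (hcomp (id2 d) xi)) with (tid d <h> tot xi).
    rewrite !tot_em_beta, whiskerl_comp.
    exact (eq_sym (whisker_exchange (tot Psi) (tot xi))).
Qed.

End EilenbergMoore.

Section LaxDescent.
Context {C : TwoCat} {e b : Ob C} {p : hom e b} (K : CokernelDiagram p).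
Local Notation d0 := (ck_d0 K).
Local Notation d1 := (ck_d1 K).
Local Notation D0 := (ck_D0 K).
Local Notation D1 := (ck_D1 K).
Local Notation D2 := (ck_D2 K).
Local Notation O := (ck_O K).

Definition DescT {y : Ob C} (h : hom y b) (B : tcell y O) : Prop :=
  src B = comp1 d1 h /\ tgt B = comp1 d0 h /\
  tid D1 <h> B = (tid D0 <h> B) <v> (tid D2 <h> B) /\ tid (ck_s0 K) <h> B = tid h.

Definition DescMorT {y : Ob C} (h0 h1 : hom y b) (B0 B1 : tcell y O) (Xi : tcell y b) : Prop :=
  B0 <v> (tid d1 <h> Xi) = (tid d0 <h> Xi) <v> B1.

Lemma desc_obj_tot {y : Ob C} (h : hom y b) (beta : cell (comp1 d1 h) (comp1 d0 h)) :
  DescObj K h beta <-> DescT h (tot beta).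
Proof.
  unfold DescObj, DescT. rewrite veq_tot.
  assert (square : comp1 D2 (comp1 d0 h) = comp1 D0 (comp1 d1 h)).
  { rewrite !c1_assoc, (proj1 (ck_pushout _ K)). reflexivity. }
  unfold heq2. tauto.
Qed.

Lemma desc_mor_tot {y : Ob C} (h0 h1 : hom y b)
    (beta0 : cell (comp1 d1 h0) (comp1 d0 h0)) (beta1 : cell (comp1 d1 h1) (comp1 d0 h1))
    (xi : cell h1 h0) :
  DescMor K beta0 beta1 xi <-> DescMorT h0 h1 (tot beta0) (tot beta1) (tot xi).
Proof.
  unfold DescMor, DescMorT.
  change (tid d1 <h> tot xi) with (tot (hcomp (id2 d1) xi)).
  change (tid d0 <h> tot xi) with (tot (hcomp (id2 d0) xi)).
  rewrite !tvc_tot. split; [intros -> | apply tot_inj]; reflexivity.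
Qed.

Lemma tot_ld_beta {L y : Ob C} (d : hom L b) (Psi : cell (comp1 d1 d) (comp1 d0 d))
    (g : hom y L) :
  tot (ld_beta K d Psi g) = tot Psi <h> tid g.
Proof. apply tot_cast. Qed.

Lemma lax_desc_object_represents {L : Ob C} (d : hom L b)
    (Psi : cell (comp1 d1 d) (comp1 d0 d)) :
  IsLaxDescObj K d Psi <-> Represents (@DescT) (@DescMorT) d (tot Psi).
Proof.
  apply (raw_represents_iff (fun _ h => comp1 d1 h) (fun _ h => comp1 d0 h)
           (fun L y d Psi g => ld_beta K d Psi g)
           (fun y h beta => DescObj K h beta)
           (fun y h0 h1 beta0 beta1 xi => DescMor K beta0 beta1 xi)).
  - intros. apply tot_ld_beta.
  - intros. apply desc_obj_tot.
  - intros y h B (sB & tB & _). auto.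
  - intros. apply desc_mor_tot.
  - intros L' y d' Psi' g g' xi. apply desc_mor_tot.
    unfold DescMorT. change (tot (hcomp (id2 d') xi)) with (tid d' <h> tot xi).
    rewrite !tot_ld_beta, !whiskerl_comp.
    exact (whisker_exchange (tot Psi') (tot xi)).
Qed.

End LaxDescent.

(** * The comparison *)

Section Comparison.
Context {C : TwoCat} {b e : Ob C} (X : Adjunction C b e) (K : CokernelDiagram (adj_p X)).
Local Notation p := (adj_p X).
Local Notation l := (adj_l X).
Local Notation t := (comp1 (adj_p X) (adj_l X)).
Local Notation E := (tot (adj_eps X)).
Local Notation N := (tot (adj_eta X)).
Local Notation A := (tot (ck_alpha K)).
Local Notation d0 := (ck_d0 K).
Local Notation d1 := (ck_d1 K).
Local Notation D0 := (ck_D0 K).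
Local Notation D1 := (ck_D1 K).
Local Notation D2 := (ck_D2 K).
Local Notation s := (ck_s0 K).
Local Notation O := (ck_O K).
Local Notation AlgRepresents :=
  (Represents (@AlgT _ _ (adj_T X) (adj_mult X) (adj_eta X)) (@AlgMorT _ _ (adj_T X))).
Local Notation DescRepresents := (Represents (@DescT _ _ _ _ K) (@DescMorT _ _ _ _ K)).

Lemma triangle_l_tot : tid l = (E <h> tid l) <v> (tid l <h> N).
Proof. exact (proj2 (proj1 (veq_tot _ _ _) (adj_tri_l X))). Qed.
Lemma triangle_p_tot : tid p = (tid p <h> E) <v> (N <h> tid p).
Proof. exact (proj2 (proj1 (veq_tot _ _ _) (adj_tri_p X))). Qed.
Lemma pushout_square : comp1 D2 d0 = comp1 D0 d1.
Proof. exact (proj1 (ck_pushout _ K)). Qed.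
Lemma pushout_square_comp {y : Ob C} (w : hom y b) :
  comp1 D2 (comp1 d0 w) = comp1 D0 (comp1 d1 w).
Proof. rewrite !c1_assoc, pushout_square. reflexivity. Qed.
Lemma D1_alpha_tot : tid D1 <h> A = (tid D0 <h> A) <v> (tid D2 <h> A).
Proof. exact (proj2 (proj1 (veq_tot _ _ _) (ck_D1_alpha _ K))). Qed.
Lemma s0_alpha_tot : tid s <h> A = tid p.
Proof. exact (ck_s0_alpha _ K). Qed.

Lemma c1_rewrite {a0 a1 a2 a : Ob C} {x : hom a1 a2} {y : hom a0 a1} {z : hom a0 a2}
    (H : comp1 x y = z) (w : hom a a0) : comp1 x (comp1 y w) = comp1 z w.
Proof. rewrite c1_assoc, H. reflexivity. Qed.

Definition alpha_mate : tcell b O := (A <h> tid l) <v> (tid d1 <h> N).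

Definition mult : tcell b b := (tid p <h> E) <h> tid l.

Definition desc_of_alg {y : Ob C} (h : hom y b) (B : tcell y b) : tcell y O :=
  (tid d0 <h> B) <v> (alpha_mate <h> tid h).

Ltac c1_normalize := repeat rewrite <- c1_assoc; rewrite ?(ax_idl _ (tc_ax C)), ?c1_idr.

Lemma src_alpha_mate : src alpha_mate = comp1 d1 (id1 b).
Proof. unfold alpha_mate. rewrite src_tvc; [reflexivity |]. cbn. c1_normalize. reflexivity. Qed.
Lemma tgt_alpha_mate : tgt alpha_mate = comp1 (comp1 d0 p) l.
Proof. unfold alpha_mate. rewrite tgt_tvc; [reflexivity |]. cbn. c1_normalize. reflexivity. Qed.
Lemma src_mult : src mult = comp1 (comp1 p (comp1 l p)) l.
Proof. reflexivity. Qed.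
Lemma tgt_mult : tgt mult = comp1 (comp1 p (id1 e)) l.
Proof. reflexivity. Qed.

Ltac boundary :=
  repeat first
    [ rewrite src_thc | rewrite tgt_thc | rewrite src_tid | rewrite tgt_tid
    | rewrite src_tot | rewrite tgt_tot | rewrite src_alpha_mate | rewrite tgt_alpha_mate
    | rewrite src_mult | rewrite tgt_mult
    | rewrite src_tvc by boundary | rewrite tgt_tvc by boundary
    | match goal with
      | H : src ?Z = _ |- context [src ?Z] => rewrite H
      | H : tgt ?Z = _ |- context [tgt ?Z] => rewrite H
      end ];
  repeat progress
    (c1_normalize; rewrite ?pushout_square, ?pushout_square_comp;
     repeat match goal with
       | H : comp1 ?x ?y = ?z |- context [comp1 ?x (comp1 ?y ?w)] => rewrite (c1_rewrite H w)
       | H : comp1 ?x ?y = ?z |- context [comp1 ?x ?y] => rewrite H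
       end);
  try reflexivity.

Ltac thc_normalize :=
  repeat rewrite ?thc_assoc, ?thc_tid, ?whiskerr_comp, ?thc_idl, ?thc_idr; c1_normalize.

Lemma s0_alpha_mate : tid s <h> alpha_mate = N.
Proof.
  unfold alpha_mate. rewrite whiskerl_tvc by boundary.
  rewrite thc_assoc, s0_alpha_tot, whiskerl_comp, (ck_s0_d1 _ K), thc_idl, thc_tid.
  apply tvc_idl. reflexivity.
Qed.

Lemma D1_alpha_mate :
  tid D1 <h> alpha_mate = ((tid D0 <h> A) <h> tid l) <v> (tid D2 <h> alpha_mate).
Proof.
  unfold alpha_mate. rewrite whiskerl_tvc by boundary.
  rewrite thc_assoc, D1_alpha_tot, whiskerr_tvc by boundary.
  rewrite whiskerl_comp, (ck_D1_d1 _ K), <- whiskerl_comp, (whiskerl_tvc D2) by boundary.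
  rewrite <- (thc_assoc (tid D2) A (tid l)), tvc_assoc by boundary. reflexivity.
Qed.

Lemma alpha_mate_mult : (tid d0 <h> mult) <v> (alpha_mate <h> tid t) = A <h> tid l.
Proof.
  unfold mult, alpha_mate. rewrite whiskerr_tvc by boundary. thc_normalize.
  assert (Hl : A <h> tid (comp1 l t) = (A <h> tid (comp1 l p)) <h> tid l)
    by (rewrite whiskerr_comp; c1_normalize; reflexivity).
  rewrite Hl, tvc_assoc by boundary. rewrite <- whiskerr_tvc by boundary.
  assert (Hexch : (tid (comp1 d0 p) <h> E) <v> (A <h> tid (comp1 l p))
                  = A <v> (tid (comp1 d1 p) <h> E)).
  { rewrite <- (thc_idr A) at 2. exact (eq_sym (whisker_exchange A E)). }
  rewrite Hexch, whiskerr_tvc by boundary.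
  assert (Htri : (tid (comp1 d1 p) <h> E <h> tid l) <v> (tid d1 <h> N <h> tid t)
                 = tid (comp1 d1 t)).
  { transitivity (tid d1 <h> (((tid p <h> E) <v> (N <h> tid p)) <h> tid l)).
    - rewrite whiskerr_tvc, whiskerl_tvc by boundary. thc_normalize. reflexivity.
    - rewrite <- triangle_p_tot, !thc_tid. reflexivity. }
  rewrite <- tvc_assoc, Htri by boundary. rewrite (c1_assoc d1 p l).
  apply tvc_idr. boundary.
Qed.

Lemma alpha_mate_natural {y : Ob C} (W : tcell y b) :
  (alpha_mate <h> tid (tgt W)) <v> (tid d1 <h> W)
  = (tid d0 <h> (tid t <h> W)) <v> (alpha_mate <h> tid (src W)).
Proof.
  pose proof (whisker_exchange alpha_mate W) as H.
  rewrite src_alpha_mate, tgt_alpha_mate, c1_idr, <- c1_assoc, <- whiskerl_comp in H.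
  exact H.
Qed.

Lemma src_desc_of_alg {y : Ob C} (h : hom y b) (B : tcell y b) :
  src B = comp1 t h -> src (desc_of_alg h B) = comp1 d1 h.
Proof. intro Hs. unfold desc_of_alg. boundary. Qed.
Lemma tgt_desc_of_alg {y : Ob C} (h : hom y b) (B : tcell y b) :
  src B = comp1 t h -> tgt B = h -> tgt (desc_of_alg h B) = comp1 d0 h.
Proof. intros Hs Ht. unfold desc_of_alg. boundary. Qed.

Lemma desc_of_alg_whisker {y y' : Ob C} (h : hom y b) (g : hom y' y) (B : tcell y b) :
  src B = comp1 t h -> tgt B = h ->
  desc_of_alg (comp1 h g) (B <h> tid g) = desc_of_alg h B <h> tid g.
Proof.
  intros Hs Ht. unfold desc_of_alg. rewrite whiskerr_tvc by boundary.
  rewrite thc_assoc, whiskerr_comp. reflexivity.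
Qed.

Lemma desc_of_alg_mor {y : Ob C} (h0 h1 : hom y b) (B0 B1 Xi : tcell y b) :
  src B0 = comp1 t h0 -> tgt B0 = h0 -> src B1 = comp1 t h1 -> tgt B1 = h1 ->
  src Xi = h1 -> tgt Xi = h0 ->
  Xi <v> B1 = B0 <v> (tid t <h> Xi) ->
  desc_of_alg h0 B0 <v> (tid d1 <h> Xi) = (tid d0 <h> Xi) <v> desc_of_alg h1 B1.
Proof.
  intros s0 t0 s1 t1 sx tx H. unfold desc_of_alg.
  rewrite <- tvc_assoc by boundary.
  rewrite <- tx at 1. rewrite alpha_mate_natural, sx, tvc_assoc by boundary.
  rewrite <- whiskerl_tvc, <- H, whiskerl_tvc by boundary.
  rewrite tvc_assoc by boundary. reflexivity.
Qed.

Lemma desc_of_alg_free {y : Ob C} (h : hom y b) :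
  desc_of_alg (comp1 t h) (mult <h> tid h) = (A <h> tid l) <h> tid h.
Proof.
  unfold desc_of_alg. rewrite <- alpha_mate_mult, whiskerr_tvc by boundary.
  rewrite thc_assoc, whiskerr_comp. reflexivity.
Qed.

Lemma desc_of_alg_unit {y : Ob C} (h : hom y b) (B : tcell y b) :
  src B = comp1 t h -> tgt B = h -> B <v> (N <h> tid h) = tid h ->
  tid s <h> desc_of_alg h B = tid h.
Proof.
  intros Hs Ht U. unfold desc_of_alg. rewrite whiskerl_tvc by boundary.
  rewrite whiskerl_comp, (ck_s0_d0 _ K), thc_idl, thc_assoc, s0_alpha_mate. exact U.
Qed.

Lemma desc_of_alg_cocycle {y : Ob C} (h : hom y b) (B : tcell y b) :
  src B = comp1 t h -> tgt B = h -> B <v> (tid t <h> B) = B <v> (mult <h> tid h) ->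
  tid D1 <h> desc_of_alg h B = (tid D0 <h> desc_of_alg h B) <v> (tid D2 <h> desc_of_alg h B).
Proof.
  intros Hs Ht Hassoc.
  (* [B] is an algebra morphism from the free algebra on [h] to [B]. *)
  assert (Hfree : desc_of_alg h B <v> (tid d1 <h> B)
                  = (tid d0 <h> B) <v> ((A <h> tid l) <h> tid h)).
  { rewrite <- desc_of_alg_free.
    apply desc_of_alg_mor; boundary. symmetry. exact Hassoc. }
  unfold desc_of_alg in *. rewrite !whiskerl_tvc by boundary.
  rewrite !whiskerl_comp, (ck_D1_d0 _ K), pushout_square, thc_assoc, D1_alpha_mate,
    whiskerr_tvc by boundary.
  rewrite <- (whiskerl_comp D0 d0), <- (whiskerl_comp D0 d1).
  transitivity (tid D0 <h> ((tid d0 <h> B) <v> (alpha_mate <h> tid h) <v> (tid d1 <h> B))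
                <v> tid D2 <h> (alpha_mate <h> tid h)).
  2: { rewrite (whiskerl_tvc D0), (whiskerl_tvc D0) by boundary.
       rewrite !tvc_assoc by boundary. reflexivity. }
  rewrite Hfree, whiskerl_tvc by boundary.
  rewrite !thc_assoc, !tvc_assoc by boundary. reflexivity.
Qed.

Section Classifier.
Variable r : hom O b.
Hypotheses (r_d0 : comp1 r d0 = id1 b) (r_d1 : comp1 r d1 = t)
  (r_alpha : tid r <h> A = tid p <h> E).

Lemma r_alpha_mate : tid r <h> alpha_mate = tid t.
Proof.
  unfold alpha_mate. rewrite whiskerl_tvc by boundary.
  rewrite thc_assoc, r_alpha, whiskerl_comp, r_d1, <- thc_assoc, <- whiskerl_comp,
    <- whiskerl_tvc by boundary.
  rewrite <- triangle_l_tot, thc_tid. reflexivity.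
Qed.

Lemma alg_of_desc_of_alg {y : Ob C} (h : hom y b) (B : tcell y b) :
  src B = comp1 t h -> tgt B = h -> tid r <h> desc_of_alg h B = B.
Proof.
  intros Hs Ht. unfold desc_of_alg. rewrite whiskerl_tvc by boundary.
  rewrite whiskerl_comp, r_d0, thc_idl, thc_assoc, r_alpha_mate, thc_tid, <- Hs.
  apply tvc_idr. reflexivity.
Qed.

Lemma alg_of_desc_mor {y : Ob C} (h0 h1 : hom y b) (B0 B1 : tcell y O) (Xi : tcell y b) :
  src B0 = comp1 d1 h0 -> tgt B0 = comp1 d0 h0 ->
  src B1 = comp1 d1 h1 -> tgt B1 = comp1 d0 h1 -> src Xi = h1 -> tgt Xi = h0 ->
  B0 <v> (tid d1 <h> Xi) = (tid d0 <h> Xi) <v> B1 ->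
  (tid r <h> B0) <v> (tid t <h> Xi) = Xi <v> (tid r <h> B1).
Proof.
  intros s0 t0 s1 t1 sx tx H. apply (f_equal (fun Z => tid r <h> Z)) in H.
  rewrite !whiskerl_tvc in H by boundary. rewrite !whiskerl_comp, r_d0, r_d1, thc_idl in H.
  exact H.
Qed.

Lemma alg_of_desc_unit {y : Ob C} (h : hom y b) (B : tcell y O) :
  src B = comp1 d1 h -> tgt B = comp1 d0 h -> tid s <h> B = tid h ->
  (tid r <h> B) <v> (N <h> tid h) = tid h.
Proof.
  intros sB tB uB. pose proof (ck_s0_d0 _ K). pose proof (ck_s0_d1 _ K).
  (* Interchange with [Z : s => r], induced by [(id, eta)], relates [s B] and [r B]. *)
  destruct (opcomma_factor_cell (ck_opcomma _ K) s r (tid (id1 b)) N)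
    as (Z & sZ & tZ & Z0 & Z1); try (boundary; fail).
  { rewrite thc_idl, s0_alpha_tot, r_alpha, <- triangle_p_tot. apply tvc_idl. reflexivity. }
  transitivity (Z <h> B).
  - rewrite (thc_whiskers_lr Z B), tZ, sB, <- (whiskerr_comp Z d1 h), Z1. reflexivity.
  - rewrite (thc_whiskers_rl Z B), tB, sZ, uB, <- (whiskerr_comp Z d0 h), Z0, thc_idl.
    apply tvc_idl. reflexivity.
Qed.

Lemma alg_of_desc_assoc {y : Ob C} (h : hom y b) (B : tcell y O) :
  src B = comp1 d1 h -> tgt B = comp1 d0 h ->
  tid D1 <h> B = (tid D0 <h> B) <v> (tid D2 <h> B) ->
  (tid r <h> B) <v> (tid t <h> (tid r <h> B)) = (tid r <h> B) <v> (mult <h> tid h).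
Proof.
  intros sB tB cB. pose proof (ck_D1_d0 _ K). pose proof (ck_D1_d1 _ K).
  (* As for the unit, now with [Z : v D1 => r] induced by [(id, mult)]. *)
  destruct (pushout_factor (ck_pushout _ K) _ (comp1 t r) r) as (v & vD2 & vD0).
  { boundary. }
  assert (VA : tid (comp1 v D1) <h> A = (tid p <h> E) <v> (tid t <h> (tid p <h> E))).
  { rewrite <- whiskerl_comp, D1_alpha_tot, whiskerl_tvc by boundary.
    rewrite !whiskerl_comp, vD0, vD2, <- (whiskerl_comp t r A), r_alpha, ?whiskerl_comp.
    reflexivity. }
  assert (EE : E <h> E = E <v> (tid (comp1 l p) <h> E)
               /\ E <h> E = E <v> (E <h> tid (comp1 l p))).
  { rewrite (thc_whiskers_rl E E) at 1. rewrite (thc_whiskers_lr E E) at 1.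
    rewrite tgt_tot, src_tot, thc_idr, thc_idl. split; reflexivity. }
  destruct (opcomma_factor_cell (ck_opcomma _ K) (comp1 v D1) r (tid (id1 b)) mult)
    as (Z & sZ & tZ & Z0 & Z1); try (boundary; fail).
  { rewrite thc_idl, VA, r_alpha. rewrite tvc_idl by boundary.
    transitivity (tid p <h> (E <h> E)).
    - rewrite (proj1 EE), whiskerl_tvc by boundary. thc_normalize. reflexivity.
    - rewrite (proj2 EE), whiskerl_tvc by boundary. unfold mult. thc_normalize. reflexivity. }
  transitivity (Z <h> B).
  - rewrite (thc_whiskers_rl Z B), tB, sZ, <- (whiskerr_comp Z d0 h), Z0, thc_idl.
    rewrite tvc_idl by boundary.
    rewrite <- (whiskerl_comp v D1 B), cB, whiskerl_tvc by boundary.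
    rewrite !whiskerl_comp, vD0, vD2, <- (whiskerl_comp t r B). reflexivity.
  - rewrite (thc_whiskers_lr Z B), tZ, sB, <- (whiskerr_comp Z d1 h), Z1. reflexivity.
Qed.

(* [q] classifies [(d0 t, d1, alpha_mate p)]; a map [w] out of the pushout with
   [w D2 = q], [w D0 = d0 r] is forced to satisfy [w D1 = id], so whiskering the
   cocycle condition by [w] recovers a descent datum from its algebra. *)
Section MateEndomorphism.
Variable q : hom O O.
Hypotheses (q_d0 : comp1 q d0 = comp1 d0 t) (q_d1 : comp1 q d1 = d1)
  (q_alpha : tid q <h> A = alpha_mate <h> tid p).

Lemma mate_endo_desc {y : Ob C} (h : hom y b) (B : tcell y O) :
  src B = comp1 d1 h -> tgt B = comp1 d0 h -> tid s <h> B = tid h ->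
  tid q <h> B = alpha_mate <h> tid h.
Proof.
  intros sB tB uB. pose proof (ck_s0_d0 _ K). pose proof (ck_s0_d1 _ K).
  destruct (opcomma_factor_cell (ck_opcomma _ K) (comp1 d1 s) q alpha_mate (tid d1))
    as (Z & sZ & tZ & Z0 & Z1); try (boundary; fail).
  { rewrite <- (whiskerl_comp d1 s A), s0_alpha_tot, q_alpha, !thc_tid. reflexivity. }
  transitivity (Z <h> B).
  - rewrite (thc_whiskers_lr Z B), tZ, sB, <- (whiskerr_comp Z d1 h), Z1, thc_tid.
    rewrite tvc_idr by boundary. reflexivity.
  - rewrite (thc_whiskers_rl Z B), tB, sZ, <- (whiskerr_comp Z d0 h), Z0,
      <- (whiskerl_comp d1 s B), uB, thc_tid.
    rewrite tvc_idr by boundary. reflexivity.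
Qed.

Lemma D1_retraction :
  exists w : hom (ck_P K) O, comp1 w D2 = q /\ comp1 w D0 = comp1 d0 r /\ comp1 w D1 = id1 O.
Proof.
  pose proof (ck_D1_d0 _ K). pose proof (ck_D1_d1 _ K).
  destruct (pushout_factor (ck_pushout _ K) _ q (comp1 d0 r)) as (w & wD2 & wD0).
  { boundary. }
  exists w. split; [exact wD2 | split; [exact wD0 |]].
  apply (opcomma_factor_unique (ck_opcomma _ K)); try (boundary; fail).
  rewrite thc_idl, <- (whiskerl_comp w D1 A), D1_alpha_tot, whiskerl_tvc by boundary.
  rewrite !whiskerl_comp, wD0, wD2, q_alpha, <- (whiskerl_comp d0 r A), r_alpha.
  unfold alpha_mate. rewrite whiskerr_tvc, tvc_assoc by boundary.
  assert (Hexch : tid d0 <h> (tid p <h> E) <v> A <h> tid l <h> tid p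
                  = A <v> (tid (comp1 d1 p) <h> E)).
  { rewrite whiskerl_comp, whiskerr_comp. rewrite <- (thc_idr A) at 2.
    exact (eq_sym (whisker_exchange A E)). }
  rewrite Hexch, <- tvc_assoc by boundary.
  assert (Htri : tid (comp1 d1 p) <h> E <v> tid d1 <h> N <h> tid p = tid (comp1 d1 p)).
  { rewrite <- (whiskerl_comp d1 p E), <- thc_assoc, <- whiskerl_tvc by boundary.
    rewrite <- triangle_p_tot. apply thc_tid. }
  rewrite Htri. apply tvc_idr. boundary.
Qed.

End MateEndomorphism.

Lemma desc_of_alg_of_desc {y : Ob C} (h : hom y b) (B : tcell y O) :
  src B = comp1 d1 h -> tgt B = comp1 d0 h ->
  tid D1 <h> B = (tid D0 <h> B) <v> (tid D2 <h> B) -> tid s <h> B = tid h ->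
  desc_of_alg h (tid r <h> B) = B.
Proof.
  intros sB tB cB uB.
  destruct (opcomma_factor (ck_opcomma _ K) (comp1 d0 t) d1 (alpha_mate <h> tid p))
    as (q & q_d0 & q_d1 & q_alpha); try (boundary; fail).
  destruct (D1_retraction q q_d0 q_d1 q_alpha) as (w & wD2 & wD0 & wD1).
  apply (f_equal (fun Z => tid w <h> Z)) in cB.
  rewrite (whiskerl_comp w D1 B), wD1, thc_idl, whiskerl_tvc in cB by boundary.
  rewrite (whiskerl_comp w D0 B), (whiskerl_comp w D2 B), wD0, wD2,
    (mate_endo_desc q q_d0 q_d1 q_alpha h B sB tB uB) in cB.
  unfold desc_of_alg. rewrite whiskerl_comp. symmetry. exact cB.
Qed.

Lemma tot_adj_mult : tot (adj_mult X) = mult.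
Proof. apply tot_cast. Qed.

Lemma alg_of_desc_alg {y : Ob C} (h : hom y b) (B : tcell y O) :
  DescT K h B -> AlgT (adj_T X) (adj_mult X) (adj_eta X) h (tid r <h> B).
Proof.
  intros (sB & tB & cB & uB). unfold AlgT. rewrite tot_adj_mult. unfold adj_T.
  split; [boundary | split; [boundary | split]].
  - apply alg_of_desc_assoc; assumption.
  - apply alg_of_desc_unit; assumption.
Qed.

Lemma desc_of_alg_desc {y : Ob C} (h : hom y b) (B : tcell y b) :
  AlgT (adj_T X) (adj_mult X) (adj_eta X) h B -> DescT K h (desc_of_alg h B).
Proof.
  unfold AlgT. rewrite tot_adj_mult. unfold adj_T. intros (sB & tB & aB & uB).
  split; [apply src_desc_of_alg | split; [apply tgt_desc_of_alg | split]]; try assumption.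
  - apply desc_of_alg_cocycle; assumption.
  - apply desc_of_alg_unit; assumption.
Qed.

Lemma represents_alg_of_desc {L : Ob C} (d : hom L b) (Psi : tcell L O) :
  DescRepresents d Psi -> AlgRepresents d (tid r <h> Psi).
Proof.
  intro R. destruct (represents_obj_self R) as (sP & tP & _).
  destruct R as [Robj Rsurj Rinj Rfull Rfaithful].
  assert (back : forall y (g : hom y L),
             desc_of_alg (comp1 d g) (tid r <h> (Psi <h> tid g)) = Psi <h> tid g).
  { intros y g. destruct (Robj y g) as (s1 & t1 & c1 & u1).
    apply desc_of_alg_of_desc; assumption. }
  constructor.
  - intros y g. rewrite <- thc_assoc. apply alg_of_desc_alg, Robj.
  - intros y h B HB. destruct (Rsurj y h _ (desc_of_alg_desc h B HB)) as (g & H1 & H2).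
    exists g. split; [exact H1 |]. destruct HB as (sB & tB & _).
    rewrite <- thc_assoc, H2. apply alg_of_desc_of_alg; assumption.
  - intros y g g' E1 E2. apply Rinj; [exact E1 |].
    rewrite <- back, <- (back y g'), !thc_assoc, E2, E1. reflexivity.
  - intros y g g' Xi sX tX HX. apply Rfull; [assumption | assumption |].
    unfold DescMorT. rewrite <- back, <- (back y g).
    apply desc_of_alg_mor; try (boundary; fail). rewrite !thc_assoc. exact HX.
  - exact Rfaithful.
Qed.

Lemma represents_desc_of_alg {L : Ob C} (u : hom L b) (Phi : tcell L b) :
  AlgRepresents u Phi -> DescRepresents u (desc_of_alg u Phi).
Proof.
  intro R. destruct (represents_obj_self R) as (sP & tP & _). unfold adj_T in sP.
  destruct R as [Robj Rsurj Rinj Rfull Rfaithful].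
  assert (whisk : forall y (g : hom y L),
             desc_of_alg u Phi <h> tid g = desc_of_alg (comp1 u g) (Phi <h> tid g)).
  { intros y g. symmetry. apply desc_of_alg_whisker; assumption. }
  assert (back : forall y (g : hom y L), tid r <h> (desc_of_alg u Phi <h> tid g) = Phi <h> tid g).
  { intros y g. rewrite whisk. apply alg_of_desc_of_alg; boundary. }
  constructor.
  - intros y g. rewrite whisk. apply desc_of_alg_desc, Robj.
  - intros y h B HB. destruct (Rsurj y h _ (alg_of_desc_alg h B HB)) as (g & H1 & H2).
    exists g. split; [exact H1 |]. destruct HB as (sB & tB & cB & uB).
    rewrite whisk, H2, H1. apply desc_of_alg_of_desc; assumption.
  - intros y g g' E1 E2. apply Rinj; [exact E1 |].
    rewrite <- back, <- (back y g'), E2. reflexivity.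
  - intros y g g' Xi sX tX HX. apply Rfull; [assumption | assumption |].
    unfold AlgMorT. rewrite <- (back y g'), <- (back y g). symmetry.
    apply (alg_of_desc_mor (comp1 u g') (comp1 u g)); try (boundary; fail);
      try (rewrite whisk; first [apply src_desc_of_alg | apply tgt_desc_of_alg]; boundary; fail).
    exact HX.
  - exact Rfaithful.
Qed.

Lemma represents_lax_desc_fact (F : LaxDescFact K) :
  AlgRepresents (ldf_d F) (tid r <h> tot (ldf_Psi _ F)).
Proof. apply represents_alg_of_desc, lax_desc_object_represents, ldf_is. Qed.

Lemma lax_desc_fact_mu_k (F : LaxDescFact K) :
  tid r <h> tot (ldf_Psi _ F) <h> tid (ldf_pH F) = tid p <h> E.
Proof. rewrite <- thc_assoc. exact (eq_trans (f_equal _ (ldf_Psi_pH _ F)) r_alpha). Qed.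

Definition em_fact_of_lax_desc_fact (F : LaxDescFact K) : EMFact X.
Proof.
  assert (es : src (tid r <h> tot (ldf_Psi _ F)) = comp1 (adj_T X) (ldf_d F))
    by (unfold adj_T; boundary).
  assert (et : tgt (tid r <h> tot (ldf_Psi _ F)) = ldf_d F) by boundary.
  refine {| emf_u := ldf_d F; emf_mu := untot _ es et; emf_k := ldf_pH F;
            emf_fact := ldf_fact _ F |}.
  - apply em_object_represents. rewrite tot_untot. apply represents_lax_desc_fact.
  - change (tot (untot _ es et) <h> tid (ldf_pH F) = tid p <h> E).
    rewrite tot_untot. apply lax_desc_fact_mu_k.
Defined.

Definition lax_desc_fact_of_em_fact (G : EMFact X) : LaxDescFact K.
Proof.
  pose (Phi := tot (emf_mu _ G)).
  assert (es : src (desc_of_alg (emf_u G) Phi) = comp1 d1 (emf_u G))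
    by (apply src_desc_of_alg; reflexivity).
  assert (et : tgt (desc_of_alg (emf_u G) Phi) = comp1 d0 (emf_u G))
    by (apply tgt_desc_of_alg; reflexivity).
  refine {| ldf_d := emf_u G; ldf_Psi := untot _ es et; ldf_pH := emf_k G;
            ldf_fact := emf_fact _ G |}.
  - apply lax_desc_object_represents. rewrite tot_untot.
    apply represents_desc_of_alg, em_object_represents, emf_is.
  - change (tot (untot _ es et) <h> tid (emf_k G) = A).
    rewrite tot_untot, <- desc_of_alg_whisker by reflexivity.
    rewrite (emf_mu_k _ G : Phi <h> tid (emf_k G) = tid p <h> E), (emf_fact _ G), <- r_alpha.
    apply desc_of_alg_of_desc; [boundary | boundary | apply D1_alpha_tot | apply s0_alpha_tot].
Defined.

Lemma lax_desc_fact_em_fact_iso (F : LaxDescFact K) (G : EMFact X) :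
  FactIso (ldf_d F) (ldf_pH F) (emf_u G) (emf_k G).
Proof.
  apply (represents_fact_iso (represents_lax_desc_fact F)
           (proj1 (em_object_represents _ _ _ _ _) (emf_is _ G))).
  - rewrite (ldf_fact _ F), (emf_fact _ G). reflexivity.
  - rewrite lax_desc_fact_mu_k. symmetry. exact (emf_mu_k _ G).
Qed.

End Classifier.

Lemma classifier_exists :
  exists r : hom O b, comp1 r d0 = id1 b /\ comp1 r d1 = t /\ tid r <h> A = tid p <h> E.
Proof. apply (opcomma_factor (ck_opcomma _ K)); boundary. Qed.

Lemma claim1 : Claim1 X K.
Proof.
  destruct classifier_exists as (r & r_d0 & r_d1 & r_alpha).
  split; [split |].
  - intros [F]. exact (inhabits (em_fact_of_lax_desc_fact r r_d0 r_d1 r_alpha F)).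
  - intros [G]. exact (inhabits (lax_desc_fact_of_em_fact r r_d0 r_d1 r_alpha G)).
  - exact (lax_desc_fact_em_fact_iso r r_d0 r_d1 r_alpha).
Qed.

End Comparison.

(** * Reversing 2-cells *)

Section CoDual.
Context {C : TwoCat}.

Lemma heq2_co_iff {a b : Ob C} {f g f' g' : hom a b}
    (x : @cell (co C) a b f g) (y : @cell (co C) a b f' g') :
  @heq2 (co C) a b f g f' g' x y <-> @heq2 C a b g f g' f' x y.
Proof.
  split; [| apply heq2_co]. unfold heq2. intro H.
  exact (f_equal (fun s : {st : hom a b * hom a b & @cell C a b (snd st) (fst st)} =>
           existT (fun st : hom a b * hom a b => @cell C a b (fst st) (snd st))
             (snd (projT1 s), fst (projT1 s)) (projT2 s)) H).
Qed.

Lemma veq_co_iff {a b : Ob C} {f1 g1 f2 g2 f3 g3 : hom a b} (w : @cell (co C) a b f1 g1)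
    (x : @cell (co C) a b f2 g2) (y : @cell (co C) a b f3 g3) :
  @veq (co C) a b f1 g1 f2 g2 f3 g3 w x y <-> @veq C a b g1 f1 g3 f3 g2 f2 w y x.
Proof.
  split; [| apply veq_co].
  intros (m & x' & y' & Hx & Hy & Hw). exists m, y', x'.
  apply heq2_co_iff in Hx, Hy, Hw. auto.
Qed.

Lemma cast2_co {a b : Ob C} {f f' g g' : hom a b} (ef : f = f') (eg : g = g')
    (x : @cell (co C) a b f g) :
  @cast2 (co C) a b f f' g g' ef eg x = @cast2 C a b g g' f f' eg ef x.
Proof. destruct ef, eg. reflexivity. Qed.

Lemma cast2_irrelevant {a b : Ob C} {f f' g g' : hom a b} (ef ef' : f = f') (eg eg' : g = g')
    (x : cell f g) :
  cast2 ef eg x = cast2 ef' eg' x.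
Proof. rewrite (UIP _ _ _ ef ef'), (UIP _ _ _ eg eg'). reflexivity. Qed.

Context {x y : Ob C} {f : hom x y} (K : CokernelDiagram f).
Local Notation d0 := (ck_d0 K).
Local Notation d1 := (ck_d1 K).
Local Notation alpha := (ck_alpha K).

Lemma oc_beta_co {z : Ob C} (h : hom (ck_O K) z) :
  @oc_beta (co C) x y (ck_O K) z f d1 d0 alpha h = oc_beta f d0 d1 alpha h.
Proof. unfold oc_beta. rewrite cast2_co. apply cast2_irrelevant. Qed.

Lemma opcomma_co : @IsOpcomma (co C) x y (ck_O K) f d1 d0 alpha.
Proof.
  destruct (ck_opcomma _ K) as [Hobj Hcell]. split.
  - intros z h0 h1 beta. destruct (Hobj z h1 h0 beta) as [h [Hh U]].
    exists h. split.
    + apply triple_eq_tot in Hh. destruct Hh as (e0 & e1 & e2).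
      apply (triple_eq_tot (C := co C)). split; [exact e1 | split; [exact e0 |]].
      apply heq2_co_iff. rewrite oc_beta_co. exact e2.
    + intros h' Hh'. apply U.
      apply (triple_eq_tot (C := co C)) in Hh'. destruct Hh' as (e0 & e1 & e2).
      apply heq2_co_iff in e2. rewrite oc_beta_co in e2. apply triple_eq_tot. auto.
  - intros z h h' xi0 xi1 H. cbn in H. rewrite !oc_beta_co in H.
    destruct (Hcell z h' h xi1 xi0 (eq_sym H)) as [xi [[X0 X1] U]].
    exists xi. split; [auto |]. intros xi' [Y0 Y1]. apply U. auto.
Qed.

Lemma pushout_co : @IsPushout2 (co C) _ _ _ _ d1 d0 (ck_D0 K) (ck_D2 K).
Proof.
  destruct (ck_pushout _ K) as (Hsq & Hobj & Hcell). split; [| split].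
  - symmetry. exact Hsq.
  - intros z k0 k1 Hk. destruct (Hobj z k1 k0 (eq_sym Hk)) as [k [[H1 H2] U]].
    exists k. split; [auto |]. intros k' [H3 H4]. apply U. auto.
  - intros z k k' xi0 xi1 H. rewrite heq2_co_iff in H.
    destruct (Hcell z k' k xi1 xi0 (eq_sym H)) as [xi [[H1 H2] U]].
    exists xi. split; [auto |]. intros xi' [H3 H4]. apply U. auto.
Qed.

(* In [A^co] the roles of [d0, d1] and of [D0, D2] are exchanged. *)
Definition cokernel_co : @CokernelDiagram (co C) x y f :=
  @Build_CokernelDiagram (co C) x y f (ck_O K) d1 d0 alpha opcomma_co
    (ck_P K) (ck_D2 K) (ck_D0 K) pushout_co (ck_D1 K) (ck_D1_d0 _ K) (ck_D1_d1 _ K)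
    (proj2 (veq_co_iff _ _ _) (ck_D1_alpha _ K))
    (ck_s0 K) (ck_s0_d1 _ K) (ck_s0_d0 _ K) (proj2 (heq2_co_iff _ _) (ck_s0_alpha _ K)).

Lemma ld_beta_co {L z : Ob C} (d : hom L y) (Psi : cell (comp1 d1 d) (comp1 d0 d)) (g : hom z L) :
  @ld_beta (co C) x y f cokernel_co L z d Psi g = ld_beta K d Psi g.
Proof. unfold ld_beta. rewrite cast2_co. apply cast2_irrelevant. Qed.

Lemma desc_obj_co {z : Ob C} (h : hom z y) (beta : cell (comp1 d1 h) (comp1 d0 h)) :
  @DescObj (co C) x y f cokernel_co z h beta <-> DescObj K h beta.
Proof. unfold DescObj. cbn. rewrite veq_co_iff, heq2_co_iff. tauto. Qed.

Lemma lax_desc_object_co {L : Ob C} (d : hom L y) (Psi : cell (comp1 d1 d) (comp1 d0 d)) :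
  @IsLaxDescObj (co C) x y f cokernel_co L d Psi <-> IsLaxDescObj K d Psi.
Proof.
  unfold IsLaxDescObj. split; intros (Hobj & Hsurj & Hfull); split; [| split | | split].
  - intros z g. pose proof (Hobj z g) as H. rewrite ld_beta_co, desc_obj_co in H. exact H.
  - intros z h beta Hb. rewrite <- desc_obj_co in Hb. destruct (Hsurj z h beta Hb) as [g [Hg U]].
    exists g. rewrite ld_beta_co in Hg. split; [exact Hg |].
    intros g' Hg'. apply U. rewrite ld_beta_co. exact Hg'.
  - intros z g g' m Hm. apply (Hfull z g' g m).
    unfold DescMor in *. cbn. rewrite !ld_beta_co. symmetry. exact Hm.
  - intros z g. rewrite desc_obj_co, ld_beta_co. apply Hobj.
  - intros z h beta Hb. rewrite desc_obj_co in Hb. destruct (Hsurj z h beta Hb) as [g [Hg U]].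
    exists g. split; [rewrite ld_beta_co; exact Hg |].
    intros g' Hg'. apply U. rewrite ld_beta_co in Hg'. exact Hg'.
  - intros z g g' m Hm. apply (Hfull z g' g m).
    unfold DescMor in *. cbn in Hm. rewrite !ld_beta_co in Hm. symmetry. exact Hm.
Qed.

Definition lax_desc_fact_to_co (F : LaxDescFact K) : @LaxDescFact (co C) x y f cokernel_co :=
  @Build_LaxDescFact (co C) x y f cokernel_co (ldf_L F) (ldf_d F) (ldf_Psi _ F)
    (proj2 (lax_desc_object_co _ _) (ldf_is _ F)) (ldf_pH F) (ldf_fact _ F)
    (proj2 (heq2_co_iff _ _) (ldf_Psi_pH _ F)).

Definition lax_desc_fact_of_co (F : @LaxDescFact (co C) x y f cokernel_co) : LaxDescFact K :=
  @Build_LaxDescFact C x y f K (ldf_L F) (ldf_d F) (ldf_Psi _ F)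
    (proj1 (lax_desc_object_co _ _) (ldf_is _ F)) (ldf_pH F) (ldf_fact _ F)
    (proj1 (heq2_co_iff _ _) (ldf_Psi_pH _ F)).

End CoDual.

Lemma claim3 {C : TwoCat} {b e : Ob C} (X : Adjunction C b e) (K : CokernelDiagram (adj_l X)) :
  Claim3 X K.
Proof.
  destruct (claim1 (adj_co X) (cokernel_co K)) as [[to_em of_em] iso].
  split; [split |].
  - intros [F]. exact (to_em (inhabits (lax_desc_fact_to_co K F))).
  - intro G. destruct (of_em G) as [F]. exact (inhabits (lax_desc_fact_of_co K F)).
  - intros F G. exact (iso (lax_desc_fact_to_co K F) G).
Qed.

Theorem theorem4p11 (A : TwoCat) (b e : Ob A) (X : Adjunction A b e) :
  (* (1) cokernel diagram of p: lax descent fact. of p ~ Eilenberg-Moore fact. *)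
  (forall K : CokernelDiagram (adj_p X), Claim1 X K) /\
  (* (2) kernel diagram of l: lax codescent fact. of l ~ Kleisli fact. *)
  (forall K : KernelDiagram (adj_l X), Claim2 X K) /\
  (* (3) cokernel diagram of l: lax descent fact. of l ~ co-Eilenberg-Moore fact. *)
  (forall K : CokernelDiagram (adj_l X), Claim3 X K) /\
  (* (4) kernel diagram of p: lax codescent fact. of p ~ co-Kleisli fact. *)
  (forall K : KernelDiagram (adj_p X), Claim4 X K).
Proof.
  split; [| split; [| split]]; intro K.
  - exact (claim1 X K).
  - exact (claim1 (adj_op X) K).
  - exact (claim3 X K).
  - exact (claim3 (adj_op X) K).
Qed.
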